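(* Assume (A1) and (A2). Then for all $\mathbf{z}\in\mathbb{W}(b^* )^2$ and $\boldsymbol\vartheta\in I_{2\pi}^2$, $$|d(\mathbf{z},\boldsymbol\vartheta)|\ge C_1(\zeta(\boldsymbol\vartheta))^2.$$
   Context: $I_{2\pi}=[0,2\pi)$. Let $\Gamma=[\gamma_0,\gamma_1,\gamma_2]^T:\mathbb{R}^2\to\mathbb{R}^3$ have $2\pi$-biperiodic differentiable components, with $\Gamma|_{I_{2\pi}^2}$ parametrizing the boundary of a bounded open region in $\mathbb{R}^3$ that is $C^\infty$-diffeomorphic to a torus. For $\mathbf{a}\in\mathbb{C}^m$, $\|\mathbf{a}\|_2=(\sum_j|a_j|^2)^{1/2}$; for a matrix, $\|\cdot\|_2$ is the induced operator norm. For $\boldsymbol\theta\in\mathbb{R}^2$, $\zeta(\boldsymbol\theta)=\sqrt{\mathrm{dist}(\theta_0,2\pi\mathbb{Z})^2+\mathrm{dist}(\theta_1,2\pi\mathbb{Z})^2}$ (for $\boldsymbol\theta\in I_{2\pi}^2$ this is $\sqrt{(\min\{\theta_0,2\pi-\theta_0\})^2+(\min\{\theta_1,2\pi-\theta_1\})^2}$). For $r>0$, $\mathbb{W}(r)=\{z\in\mathbb{C}:|\mathrm{Im}\,z|<r\}$. (A1): there is $C_0>0$ with $\|\Gamma(\boldsymbol\theta)-\Gamma(\boldsymbol\eta)\|_2\ge C_0\zeta(\boldsymbol\theta-\boldsymbol\eta)$ for all $\boldsymbol\theta,\boldsymbol\eta\in I_{2\pi}^2$. (A2): there is $R_0>0$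 such that for each $j$ the ($2\pi$-biperiodic) function $\gamma_j$ extends analytically to the closure of $\mathbb{W}(R_0)^2\subset\mathbb{C}^2$ (extensions still denoted $\gamma_j$, $\Gamma$). For $\mathbf{z}=[z_0,z_1]$, $\mathrm{Re}(\mathbf{z})=[\mathrm{Re}\,z_0,\mathrm{Re}\,z_1]$; $D\gamma_j(\mathbf{z})=[\partial\gamma_j/\partial z_0,\partial\gamma_j/\partial z_1](\mathbf{z})$ is the complex gradient and $\mathbf{H}_j(\mathbf{z})$ the $2\times2$ matrix of complex second partial derivatives of $\gamma_j$. Let $M_{0,j}=\sup_{\mathbf{z}\in\mathbb{W}(R_0)^2}\|D\gamma_j(\mathbf{z})+D\gamma_j(\mathrm{Re}(\mathbf{z}))\|_2$, $M_{1,j}=\sup_{\mathbf{z}\in\mathbb{W}(R_0)^2}\|\mathbf{H}_j(\mathbf{z})\|_2$, $M_0=(\sum_{j=0}^2M_{0,j}^2)^{1/2}$, $M_1=(\sum_{j=0}^2M_{1,j}^2)^{1/2}$. Fix $b$ with $0<b<\min\{\frac{C_0^2}{\sqrt2M_0M_1},\frac{R_0}{2}\}$, let $b^*=\frac12\big(b+\min\{\frac{C_0^2}{\sqrt2M_0M_1},\frac{R_0}{2}\}\big)$ and $C_1=C_0^2-\sqrt2M_0M_1b^*$. For $\mathbf{z}\in\mathbb{W}(R_0)^2$ and $\boldsymbol\vartheta\in I_{2\pi}^2$, $d(\mathbf{z},\boldsymbol\vartheta)=\sum_{j=0}^2(\gamma_j(\mathbf{z})-\gamma_j(\mathbf{z}+\boldsymbol\vartheta))^2$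 (the analytic extension of $\|\Gamma(\boldsymbol\theta)-\Gamma(\boldsymbol\theta+\boldsymbol\vartheta)\|_2^2$). *)

From Stdlib Require Import Reals Lra.
From Coquelicot Require Import Coquelicot.
Open Scope R_scope.

Definition dist2piZ (t : R) : R :=
  real (Glb_Rbar (fun x => exists k : Z, x = Rabs (t - 2 * PI * IZR k))).

Definition zeta (t0 t1 : R) : R :=
  sqrt (dist2piZ t0 ^ 2 + dist2piZ t1 ^ 2).

Definition inW (r : R) (z : C) : Prop := Rabs (Im z) < r.
Definition inWcl (r : R) (z : C) : Prop := Rabs (Im z) <= r.

Definition vnorm2 (a b : C) : R := sqrt (Cmod a ^ 2 + Cmod b ^ 2).

Definition mxnorm2 (p q r s : C) : R :=
  real (Lub_Rbar (fun x => exists v0 v1 : C, vnorm2 v0 v1 = 1 /\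
     x = vnorm2 (p * v0 + q * v1)%C (r * v0 + s * v1)%C)).

Definition openC2 (U : C -> C -> Prop) : Prop :=
  forall z0 z1, U z0 z1 -> exists eps, 0 < eps /\
    forall w0 w1, Cmod (w0 - z0)%C < eps -> Cmod (w1 - z1)%C < eps -> U w0 w1.

Definition cdiff2_on (U : C -> C -> Prop) (f a b : C -> C -> C) : Prop :=
  forall z0 z1, U z0 z1 -> forall eps, 0 < eps -> exists delta, 0 < delta /\
    forall h0 h1 : C, Cmod h0 < delta -> Cmod h1 < delta ->
      Cmod (f (z0 + h0)%C (z1 + h1)%C - f z0 z1 - a z0 z1 * h0 - b z0 z1 * h1)%C
        <= eps * (Cmod h0 + Cmod h1).

Definition M0j (R0 : R) (D0 D1 : C -> C -> C) : R :=
  real (Lub_Rbar (fun x => exists z0 z1, inW R0 z0 /\ inW R0 z1 /\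
     x = vnorm2 (D0 z0 z1 + D0 (RtoC (Re z0)) (RtoC (Re z1)))%C
                (D1 z0 z1 + D1 (RtoC (Re z0)) (RtoC (Re z1)))%C)).

(* M_{1,j}; H k l is d^2 gamma_j / dz_k dz_l *)
Definition M1j (R0 : R) (H : nat -> nat -> C -> C -> C) : R :=
  real (Lub_Rbar (fun x => exists z0 z1, inW R0 z0 /\ inW R0 z1 /\
     x = mxnorm2 (H 0%nat 0%nat z0 z1) (H 0%nat 1%nat z0 z1)
                 (H 1%nat 0%nat z0 z1) (H 1%nat 1%nat z0 z1))).

Definition Mbig0 (R0 : R) (D : nat -> nat -> C -> C -> C) : R :=
  sqrt (M0j R0 (D 0%nat 0%nat) (D 0%nat 1%nat) ^ 2
      + M0j R0 (D 1%nat 0%nat) (D 1%nat 1%nat) ^ 2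
      + M0j R0 (D 2%nat 0%nat) (D 2%nat 1%nat) ^ 2).

Definition Mbig1 (R0 : R) (H : nat -> nat -> nat -> C -> C -> C) : R :=
  sqrt (M1j R0 (H 0%nat) ^ 2 + M1j R0 (H 1%nat) ^ 2 + M1j R0 (H 2%nat) ^ 2).

Definition bmax (C0 R0 m0 m1 : R) : R :=
  Rmin (C0 ^ 2 / (sqrt 2 * m0 * m1)) (R0 / 2).

Definition bstar (b C0 R0 m0 m1 : R) : R := (b + bmax C0 R0 m0 m1) / 2.

Definition Cone (b C0 R0 m0 m1 : R) : R :=
  C0 ^ 2 - sqrt 2 * m0 * m1 * bstar b C0 R0 m0 m1.

Definition gam (G : nat -> C -> C -> C) (j : nat) (t0 t1 : R) : R :=
  Re (G j (RtoC t0) (RtoC t1)).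

Definition gdist (G : nat -> C -> C -> C) (t0 t1 s0 s1 : R) : R :=
  sqrt ((gam G 0 t0 t1 - gam G 0 s0 s1) ^ 2
      + (gam G 1 t0 t1 - gam G 1 s0 s1) ^ 2
      + (gam G 2 t0 t1 - gam G 2 s0 s1) ^ 2).

Definition dfun (G : nat -> C -> C -> C) (z0 z1 : C) (t0 t1 : R) : C :=
  ((G 0%nat z0 z1 - G 0%nat (z0 + RtoC t0) (z1 + RtoC t1)) ^ 2
 + (G 1%nat z0 z1 - G 1%nat (z0 + RtoC t0) (z1 + RtoC t1)) ^ 2
 + (G 2%nat z0 z1 - G 2%nat (z0 + RtoC t0) (z1 + RtoC t1)) ^ 2)%C.

Definition inI2pi (t : R) : Prop := 0 <= t < 2 * PI.

(* Let A_j = gamma_j(z) - gamma_j(z + theta) and let B_j be the same increment at Re z, where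
   theta is the representative of its class mod 2 pi Z with |theta| = zeta(theta). Then
   d(z, theta) = sum B_j^2 + sum (A_j - B_j) (A_j + B_j). The first sum is
   |Gamma(Re z) - Gamma(Re z + theta)|^2 >= C0^2 zeta(theta)^2 by (A1). The mean value
   inequality along theta gives |A_j + B_j| <= M_{0,j} |theta|, and, applied once more along
   the vertical segment from Re z to z, |A_j - B_j| <= M_{1,j} |Im z| |theta|; by
   Cauchy-Schwarz the cross term is at most sqrt 2 M0 M1 b* zeta(theta)^2.
   The constants only mean something if the suprema are finite ([real] of an infinite
   [Lub_Rbar] is 0): D is bounded on the strip by compactness and periodicity, and H, which is
   not assumed continuous, by the Cauchy estimate, proved from Goursat's theorem for squares. *)

From Stdlib Require Import Reals Lra Lia Psatz ZArith ClassicalEpsilon.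
From Coquelicot Require Import Coquelicot.
Open Scope R_scope.

Lemma im_le_Cmod (c : C) : Rabs (Im c) <= Cmod c.
Proof.
  destruct c as [a b]. unfold Cmod; simpl. rewrite <- sqrt_Rsqr_abs.
  apply sqrt_le_1_alt. unfold Rsqr. nra.
Qed.

Lemma Cmod_pair_le (a b : R) : Cmod (a, b) <= Rabs a + Rabs b.
Proof.
  pose proof (Rabs_pos a); pose proof (Rabs_pos b).
  unfold Cmod; simpl. rewrite <- (sqrt_Rsqr (Rabs a + Rabs b)) by lra.
  apply sqrt_le_1_alt. unfold Rsqr. rewrite !Rmult_1_r.
  pose proof (pow2_abs a); pose proof (pow2_abs b). simpl in *. nra.
Qed.

Lemma Cmod_le_Re_Im (z : C) : Cmod z <= Rabs (Re z) + Rabs (Im z).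
Proof. destruct z as [p q]. apply Cmod_pair_le. Qed.

Lemma Cminus_pair (a b c d : R) : ((a, b) - (c, d))%C = ((a - c)%R, (b - d)%R).
Proof. unfold Cminus, Cplus, Copp; simpl; f_equal; ring. Qed.

Lemma Cmod_sub_pair_le (u v p1 p2 : R) :
  Cmod ((u, v) - (p1, p2))%C <= Rabs (u - p1) + Rabs (v - p2).
Proof. rewrite Cminus_pair. apply Cmod_pair_le. Qed.

Lemma Cmod_Ci_mult (z : C) : Cmod (Ci * z)%C = Cmod z.
Proof. rewrite Cmod_mult, Cmod_Ci. ring. Qed.

Lemma Cmod_triangle3 (a b c : C) : Cmod (a + b + c)%C <= Cmod a + Cmod b + Cmod c.
Proof. pose proof (Cmod_triangle (a + b) c). pose proof (Cmod_triangle a b). lra. Qed.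

Lemma Cmod_triangle4 (a b c d : C) :
  Cmod (a + b + c + d)%C <= Cmod a + Cmod b + Cmod c + Cmod d.
Proof.
  pose proof (Cmod_triangle (a + b + c) d). pose proof (Cmod_triangle (a + b) c).
  pose proof (Cmod_triangle a b). lra.
Qed.

Lemma mult_div_le (a K e : R) : 0 <= a -> a <= K -> 0 < K -> 0 <= e -> a * (e / K) <= e.
Proof.
  intros Ha HaK HK He. replace (a * (e / K)) with (a / K * e) by (field; lra).
  assert (a / K <= 1) by (apply (Rdiv_le_1 a); lra). nra.
Qed.

Lemma C_eq_0_of_le_eps (c : C) (K : R) :
  (forall eps, 0 < eps -> Cmod c <= K * eps) -> c = 0%C.
Proof.
  intros H. apply Cmod_eq_0. pose proof (Cmod_ge_0 c).
  destruct (Req_dec (Cmod c) 0) as [Z|Z]; auto.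
  pose proof (H 1 Rlt_0_1). assert (HK : 0 < K) by lra.
  specialize (H (Cmod c / (2 * K)) ltac:(apply Rdiv_lt_0_compat; lra)).
  replace (K * (Cmod c / (2 * K))) with (Cmod c / 2) in H by (field; lra). lra.
Qed.

Definition Ccont_at (f : C -> C) (z : C) : Prop :=
  forall eps, 0 < eps -> exists delta, 0 < delta /\
    forall h, Cmod h < delta -> Cmod (f (z + h) - f z)%C < eps.

Definition is_little_o0 (E : C -> C) : Prop :=
  forall eps, 0 < eps -> exists delta, 0 < delta /\
    forall h, Cmod h < delta -> Cmod (E h) <= eps * Cmod h.

Definition is_cderiv (f : C -> C) (z d : C) : Prop :=
  is_little_o0 (fun h => f (z + h) - f z - d * h)%C.

Lemma is_little_o0_ext E1 E2 : (forall h, E1 h = E2 h) -> is_little_o0 E1 -> is_little_o0 E2.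
Proof.
  intros E H eps Heps. destruct (H eps Heps) as [delta [Hd Hd']].
  exists delta. split; auto. intros h Hh. rewrite <- E. auto.
Qed.

Lemma is_little_o0_plus E1 E2 :
  is_little_o0 E1 -> is_little_o0 E2 -> is_little_o0 (fun h => E1 h + E2 h)%C.
Proof.
  intros H1 H2 eps Heps.
  destruct (H1 (eps / 2) ltac:(lra)) as [d1 [Hd1 Hd1']].
  destruct (H2 (eps / 2) ltac:(lra)) as [d2 [Hd2 Hd2']].
  exists (Rmin d1 d2). split; [apply Rmin_pos; auto|]. intros h Hh.
  pose proof (Rmin_l d1 d2). pose proof (Rmin_r d1 d2).
  specialize (Hd1' h ltac:(lra)). specialize (Hd2' h ltac:(lra)).
  eapply Rle_trans; [apply Cmod_triangle|]. lra.
Qed.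

Lemma is_little_o0_mult_bounded E B K : is_little_o0 E ->
  (exists delta, 0 < delta /\ forall h, Cmod h < delta -> Cmod (B h) <= K) ->
  is_little_o0 (fun h => E h * B h)%C.
Proof.
  intros HE [d0 [Hd0 HB]] eps Heps.
  assert (HK : 0 <= K) by (specialize (HB 0%C ltac:(rewrite Cmod_0; lra));
                           pose proof (Cmod_ge_0 (B 0%C)); lra).
  destruct (HE (eps / (K + 1))) as [d1 [Hd1 Hd1']]; [apply Rdiv_lt_0_compat; lra|].
  exists (Rmin d0 d1). split; [apply Rmin_pos; auto|]. intros h Hh.
  pose proof (Rmin_l d0 d1). pose proof (Rmin_r d0 d1).
  specialize (HB h ltac:(lra)). specialize (Hd1' h ltac:(lra)). pose proof (Cmod_ge_0 h).
  rewrite Cmod_mult, Rmult_comm.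
  apply Rle_trans with (K * (eps * Cmod h / (K + 1))).
  - replace (eps * Cmod h / (K + 1)) with (eps / (K + 1) * Cmod h) by (field; lra).
    apply Rmult_le_compat; auto using Cmod_ge_0.
  - apply mult_div_le; nra.
Qed.

Lemma is_little_o0_scal (c : C) E : is_little_o0 E -> is_little_o0 (fun h => c * E h)%C.
Proof.
  intros HE. apply (is_little_o0_ext (fun h => E h * c)%C); [intros; ring|].
  apply (is_little_o0_mult_bounded E (fun _ => c) (Cmod c)); auto.
  exists 1. split; [lra|]. intros. lra.
Qed.

Lemma is_little_o0_mult_vanishing A B K :
  (exists delta, 0 < delta /\ forall h, Cmod h < delta -> Cmod (A h) <= K * Cmod h) ->
  (forall eps, 0 < eps -> exists delta, 0 < delta /\ forall h, Cmod h < delta -> Cmod (B h) < eps) ->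
  is_little_o0 (fun h => A h * B h)%C.
Proof.
  intros [d0 [Hd0 HA]] HB eps Heps.
  assert (HK : forall h, Cmod h < d0 -> Cmod (A h) <= (Rabs K + 1) * Cmod h).
  { intros h Hh. pose proof (HA h Hh). pose proof (Cmod_ge_0 h). pose proof (Rle_abs K). nra. }
  destruct (HB (eps / (Rabs K + 1))) as [d1 [Hd1 Hd1']].
  { pose proof (Rabs_pos K). apply Rdiv_lt_0_compat; lra. }
  exists (Rmin d0 d1). split; [apply Rmin_pos; auto|]. intros h Hh.
  pose proof (Rmin_l d0 d1). pose proof (Rmin_r d0 d1). pose proof (Rabs_pos K).
  specialize (HK h ltac:(lra)). specialize (Hd1' h ltac:(lra)). pose proof (Cmod_ge_0 h).
  rewrite Cmod_mult.
  apply Rle_trans with ((Rabs K + 1) * Cmod h * (eps / (Rabs K + 1)));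
    [apply Rmult_le_compat; auto using Cmod_ge_0; lra|].
  right. field. lra.
Qed.

Lemma is_cderiv_lipschitz f z d : is_cderiv f z d ->
  exists delta, 0 < delta /\
    forall h, Cmod h < delta -> Cmod (f (z + h) - f z)%C <= (Cmod d + 1) * Cmod h.
Proof.
  intros Hf. destruct (Hf 1 Rlt_0_1) as [delta [Hd Hd']]. exists delta. split; auto.
  intros h Hh. specialize (Hd' h Hh).
  replace (f (z + h) - f z)%C with ((f (z + h) - f z - d * h) + d * h)%C by ring.
  eapply Rle_trans; [apply Cmod_triangle|]. rewrite Cmod_mult. lra.
Qed.

Lemma is_cderiv_cont f z d : is_cderiv f z d -> Ccont_at f z.
Proof.
  intros Hf eps Heps. destruct (is_cderiv_lipschitz f z d Hf) as [d1 [Hd1 Hd1']].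
  pose proof (Cmod_ge_0 d).
  exists (Rmin d1 (eps / (Cmod d + 2))). split.
  { apply Rmin_pos; auto. apply Rdiv_lt_0_compat; lra. }
  intros h Hh. pose proof (Rmin_l d1 (eps / (Cmod d + 2))).
  pose proof (Rmin_r d1 (eps / (Cmod d + 2))).
  eapply Rle_lt_trans; [apply Hd1'; lra|].
  apply Rle_lt_trans with ((Cmod d + 2) * Cmod h); [pose proof (Cmod_ge_0 h); nra|].
  apply Rmult_lt_reg_r with (/ (Cmod d + 2)); [apply Rinv_0_lt_compat; lra|].
  replace ((Cmod d + 2) * Cmod h * / (Cmod d + 2)) with (Cmod h) by (field; lra). lra.
Qed.

Lemma is_cderiv_sub_const f z d (c : C) :
  is_cderiv f z d -> is_cderiv (fun u => f u - c)%C z d.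
Proof. apply is_little_o0_ext. intros h. ring. Qed.

Lemma is_cderiv_sub_scal f g z a b (c : C) : is_cderiv f z a -> is_cderiv g z b ->
  is_cderiv (fun u => f u - c * g u)%C z (a - c * b)%C.
Proof.
  intros Hf Hg. eapply is_little_o0_ext; [|exact (is_little_o0_plus _ _ Hf (is_little_o0_scal (- c) _ Hg))].
  intros h. simpl. ring.
Qed.

Lemma is_cderiv_mult f g z a b : is_cderiv f z a -> is_cderiv g z b ->
  is_cderiv (fun u => f u * g u)%C z (a * g z + f z * b)%C.
Proof.
  intros Hf Hg. pose proof (is_cderiv_cont g z b Hg) as Cg.
  assert (T1 : is_little_o0 (fun h => (f (z + h) - f z - a * h) * g (z + h))%C).
  { apply (is_little_o0_mult_bounded _ _ (Cmod (g z) + 1)); auto.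
    destruct (Cg 1 Rlt_0_1) as [d [Hd Hd']]. exists d. split; auto. intros h Hh.
    specialize (Hd' h Hh). replace (g (z + h)%C) with (g z + (g (z + h) - g z))%C by ring.
    eapply Rle_trans; [apply Cmod_triangle|]. lra. }
  assert (T3 : is_little_o0 (fun h => (a * h) * (g (z + h) - g z))%C).
  { apply (is_little_o0_mult_vanishing _ _ (Cmod a)); auto.
    exists 1. split; [lra|]. intros h _. rewrite Cmod_mult. lra. }
  eapply is_little_o0_ext;
    [|exact (is_little_o0_plus _ _ (is_little_o0_plus _ _ T1 (is_little_o0_scal (f z) _ Hg)) T3)].
  intros h. simpl. ring.
Qed.

Lemma is_cderiv_inv_sub w z : z <> w ->
  is_cderiv (fun u => / (u - w))%C z (- / ((z - w) * (z - w)))%C.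
Proof.
  intros Hz eps Heps.
  assert (Hu : (z - w)%C <> 0%C).
  { intro E. apply Hz. replace z with ((z - w) + w)%C by ring. rewrite E. ring. }
  set (u := (z - w)%C) in *. pose proof (proj1 (Cmod_gt_0 u) Hu) as Hu'.
  set (r := Rmin (Cmod u / 2) (eps * (Cmod u * Cmod u * Cmod u) / 2)).
  assert (Hr : 0 < r).
  { apply Rmin_pos; [lra|]. apply Rdiv_lt_0_compat; [|lra].
    repeat apply Rmult_lt_0_compat; auto. }
  exists r. split; auto. intros h Hh.
  pose proof (Rmin_l (Cmod u / 2) (eps * (Cmod u * Cmod u * Cmod u) / 2)) as Hr1.
  pose proof (Rmin_r (Cmod u / 2) (eps * (Cmod u * Cmod u * Cmod u) / 2)) as Hr2.
  fold r in Hr1, Hr2.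
  assert (Huh : Cmod u / 2 <= Cmod (u + h)%C).
  { assert (Cmod u <= Cmod (u + h)%C + Cmod h).
    { replace u with ((u + h) + - h)%C at 1 by ring.
      eapply Rle_trans; [apply Cmod_triangle|]. rewrite Cmod_opp. lra. }
    lra. }
  assert (Huh0 : (u + h)%C <> 0%C) by (intro E; rewrite E, Cmod_0 in Huh; lra).
  replace (z + h - w)%C with (u + h)%C by (unfold u; ring).
  replace (/ (u + h) - / u - - / (u * u) * h)%C with (h * h / (u * u * (u + h)))%C
    by (field; auto).
  rewrite Cmod_div by (repeat apply Cmult_neq_0; auto).
  rewrite !Cmod_mult. pose proof (Cmod_ge_0 h).
  apply Rmult_le_reg_r with (Cmod u * Cmod u * Cmod (u + h)%C).
  { repeat apply Rmult_lt_0_compat; lra. }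
  unfold Rdiv. rewrite Rmult_assoc, Rinv_l by (apply Rgt_not_eq; repeat apply Rmult_lt_0_compat; lra).
  rewrite Rmult_1_r.
  assert (eps * Cmod h * (Cmod u * Cmod u * (Cmod u / 2))
          <= eps * Cmod h * (Cmod u * Cmod u * Cmod (u + h)%C)).
  { apply Rmult_le_compat_l; [nra|]. apply Rmult_le_compat_l; [nra|lra]. }
  nra.
Qed.

Lemma is_RInt_Cmult (h : R -> C) a b (l c : C) :
  is_RInt h a b l -> is_RInt (fun t => c * h t)%C a b (c * l)%C.
Proof.
  intros H.
  pose proof (is_RInt_fct_extend_fst _ _ _ _ H) as H1.
  pose proof (is_RInt_fct_extend_snd _ _ _ _ H) as H2.
  apply (is_RInt_fct_extend_pair (U := R_NormedModule) (V := R_NormedModule)); simpl.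
  - pose proof (is_RInt_minus _ _ _ _ _ _ (is_RInt_scal _ _ _ (fst c) _ H1)
                                           (is_RInt_scal _ _ _ (snd c) _ H2)) as H3.
    eapply is_RInt_ext; [|exact H3]. intros x _.
    unfold minus, plus, opp, scal; simpl. unfold mult; simpl. ring.
  - pose proof (is_RInt_plus _ _ _ _ _ _ (is_RInt_scal _ _ _ (fst c) _ H2)
                                          (is_RInt_scal _ _ _ (snd c) _ H1)) as H3.
    eapply is_RInt_ext; [|exact H3]. intros x _.
    unfold minus, plus, opp, scal; simpl. unfold mult; simpl. ring.
Qed.

Lemma norm_Cmod (x : C) : @norm R_AbsRing C_R_NormedModule x = Cmod x.
Proof.
  unfold norm; simpl. unfold prod_norm, Cmod; simpl. unfold norm; simpl. unfold abs; simpl.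
  destruct x as [a b]; simpl. f_equal; rewrite !Rmult_1_r, <- !Rabs_mult, !Rabs_pos_eq; nra.
Qed.

Lemma is_RInt_Re_Im (h : R -> C) a b (l : C) : is_RInt h a b l ->
  is_RInt (fun t => Re (h t)) a b (Re l) /\ is_RInt (fun t => Im (h t)) a b (Im l).
Proof.
  intros I. split.
  - exact (@is_RInt_fct_extend_fst R_NormedModule R_NormedModule _ _ _ _ I).
  - exact (@is_RInt_fct_extend_snd R_NormedModule R_NormedModule _ _ _ _ I).
Qed.

Lemma is_RInt_ge_const (g : R -> R) s l m : 0 <= s -> is_RInt g 0 s l ->
  (forall t, 0 <= t <= s -> m <= g t) -> m * s <= l.
Proof.
  intros Hs Hi Hm. pose proof (@is_RInt_const R_NormedModule 0 s m) as Hc.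
  pose proof (is_RInt_le (fun _ => m) g 0 s _ _ Hs Hc Hi ltac:(intros; apply Hm; lra)) as H.
  unfold scal in H; simpl in H; unfold mult in H; simpl in H. lra.
Qed.

Lemma is_RInt_le_const (g : R -> R) s l m : 0 <= s -> is_RInt g 0 s l ->
  (forall t, 0 <= t <= s -> g t <= m) -> l <= m * s.
Proof.
  intros Hs Hi Hm. pose proof (@is_RInt_const R_NormedModule 0 s m) as Hc.
  pose proof (is_RInt_le g (fun _ => m) 0 s _ _ Hs Hi Hc ltac:(intros; apply Hm; lra)) as H.
  unfold scal in H; simpl in H; unfold mult in H; simpl in H. lra.
Qed.

Definition Rcont_at (g : R -> C) (t : R) : Prop :=
  forall eps, 0 < eps -> exists delta, 0 < delta /\
    forall t', Rabs (t' - t) < delta -> Cmod (g t' - g t)%C < eps.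

Lemma Rcont_ex_RInt (g : R -> C) a b : a <= b ->
  (forall t, a <= t <= b -> Rcont_at g t) -> ex_RInt g a b.
Proof.
  intros Hab H. apply (@ex_RInt_continuous C_R_CompleteNormedModule). intros z Hz.
  rewrite Rmin_left in Hz by lra. rewrite Rmax_right in Hz by lra.
  apply filterlim_locally. intros eps.
  destruct (H z Hz eps (cond_pos eps)) as [d [Hd Hd']].
  exists (mkposreal d Hd). intros y Hy. specialize (Hd' y Hy).
  split; unfold ball; simpl; unfold AbsRing_ball; simpl; unfold abs, minus, plus, opp; simpl.
  - eapply Rle_lt_trans; [|exact Hd']. exact (re_le_Cmod (g y - g z)%C).
  - eapply Rle_lt_trans; [|exact Hd']. exact (im_le_Cmod (g y - g z)%C).
Qed.

Definition line_int (f : C -> C) (x y ex ey s : R) : C :=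
  @RInt C_R_CompleteNormedModule (fun t => f (x + t * ex, y + t * ey)) 0 s.

Lemma Ccont_line f x y ex ey t0 : Ccont_at f (x + t0 * ex, y + t0 * ey) ->
  Rcont_at (fun t => f (x + t * ex, y + t * ey)) t0.
Proof.
  intros H eps Heps. destruct (H eps Heps) as [d [Hd Hd']].
  set (K := Rabs ex + Rabs ey + 1).
  assert (HK : 0 < K) by (unfold K; pose proof (Rabs_pos ex); pose proof (Rabs_pos ey); lra).
  exists (d / K). split; [apply Rdiv_lt_0_compat; lra|]. intros t' Ht'.
  specialize (Hd' ((t' - t0) * ex, (t' - t0) * ey)).
  replace (x + t' * ex, y + t' * ey)
    with (Cplus (x + t0 * ex, y + t0 * ey) ((t' - t0) * ex, (t' - t0) * ey))
    by (unfold Cplus; simpl; f_equal; ring).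
  apply Hd'. eapply Rle_lt_trans; [apply Cmod_pair_le|]. rewrite !Rabs_mult.
  pose proof (Rabs_pos (t' - t0)). pose proof (Rabs_pos ex). pose proof (Rabs_pos ey).
  apply Rle_lt_trans with (Rabs (t' - t0) * K); [unfold K; nra|].
  apply Rmult_lt_reg_r with (/ K); [apply Rinv_0_lt_compat; lra|].
  replace (Rabs (t' - t0) * K * / K) with (Rabs (t' - t0)) by (field; lra). exact Ht'.
Qed.

Section Lines.
Variables (f : C -> C) (x y ex ey : R).

Lemma line_int_correct s : 0 <= s ->
  (forall t, 0 <= t <= s -> Ccont_at f (x + t * ex, y + t * ey)) ->
  @is_RInt C_R_NormedModule (fun t => f (x + t * ex, y + t * ey)) 0 s (line_int f x y ex ey s).
Proof.
  intros Hs H. apply (@RInt_correct C_R_CompleteNormedModule).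
  apply Rcont_ex_RInt; auto. intros t Ht. apply Ccont_line; auto.
Qed.

Lemma line_int_split s1 s2 : 0 <= s1 -> 0 <= s2 ->
  (forall t, 0 <= t <= s1 + s2 -> Ccont_at f (x + t * ex, y + t * ey)) ->
  line_int f x y ex ey (s1 + s2)
  = (line_int f x y ex ey s1 + line_int f (x + s1 * ex) (y + s1 * ey) ex ey s2)%C.
Proof.
  intros H1 H2 H. unfold line_int.
  assert (E : forall a b, 0 <= a -> a <= b -> b <= s1 + s2 ->
     @ex_RInt C_R_NormedModule (fun t => f (x + t * ex, y + t * ey)) a b).
  { intros a b Ha Hab Hb. apply Rcont_ex_RInt; auto.
    intros t Ht. apply Ccont_line, H. lra. }
  rewrite <- (@RInt_Chasles C_R_CompleteNormedModule _ 0 s1 (s1 + s2)) by (apply E; lra).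
  pose proof (@RInt_comp_lin C_R_CompleteNormedModule
                (fun t => f (x + t * ex, y + t * ey)) 1 s1 0 s2) as HL.
  replace (1 * 0 + s1) with s1 in HL by ring. replace (1 * s2 + s1) with (s1 + s2) in HL by ring.
  rewrite <- HL by (apply E; lra).
  change (plus ?a ?b) with (Cplus a b). f_equal. apply RInt_ext. intros t _.
  replace (x + (1 * t + s1) * ex) with (x + s1 * ex + t * ex) by ring.
  replace (y + (1 * t + s1) * ey) with (y + s1 * ey + t * ey) by ring.
  destruct (f _) as [u v]. unfold scal; simpl. unfold prod_scal; simpl.
  unfold scal; simpl. unfold mult; simpl. f_equal; ring.
Qed.

End Lines.

Lemma line_int_sub_scal f g x y ex ey s (c : C) : 0 <= s ->
  (forall t, 0 <= t <= s -> Ccont_at f (x + t * ex, y + t * ey)) ->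
  (forall t, 0 <= t <= s -> Ccont_at g (x + t * ex, y + t * ey)) ->
  line_int (fun z => f z - c * g z)%C x y ex ey s
  = (line_int f x y ex ey s - c * line_int g x y ex ey s)%C.
Proof.
  intros Hs Hf Hg.
  pose proof (line_int_correct f x y ex ey s Hs Hf) as I1.
  pose proof (is_RInt_Cmult _ _ _ _ c (line_int_correct g x y ex ey s Hs Hg)) as I2.
  apply (@is_RInt_unique C_R_CompleteNormedModule).
  exact (is_RInt_minus _ _ _ _ _ _ I1 I2).
Qed.

(* The contour integral of [f] along the positively oriented boundary of the square
   [[x, x + s] * [y, y + s]]: bottom, right, top and left sides. *)

Definition square_int (f : C -> C) (x y s : R) : C :=
  (line_int f x y 1 0 s + Ci * line_int f (x + s) y 0 1 s
   - line_int f x (y + s) 1 0 s - Ci * line_int f x y 0 1 s)%C.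

Definition square_integrand (f : C -> C) (x y s t : R) : C :=
  let bottom := f (x + t, y) in let right := f (x + s, y + t) in
  let top := f (x + t, y + s) in let left := f (x, y + t) in
  (bottom + Ci * right - top - Ci * left)%C.

Definition on_square_boundary (P : C -> Prop) (x y s : R) : Prop :=
  forall t, 0 <= t <= s ->
    P (x + t, y) /\ P (x + s, y + t) /\ P (x + t, y + s) /\ P (x, y + t).

Ltac boundary_side HS :=
  let t := fresh "t" in let Ht := fresh "Ht" in
  intros t Ht; rewrite ?Rmult_1_r, ?Rmult_0_r, ?Rplus_0_r;
  let A1 := fresh in let A2 := fresh in let A3 := fresh in let A4 := fresh in
  destruct (HS t ltac:(lra)) as [A1 [A2 [A3 A4]]]; assumption.

Lemma line_int_split_h f x y s1 s2 : 0 <= s1 -> 0 <= s2 ->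
  (forall t, 0 <= t <= s1 + s2 -> Ccont_at f (x + t, y)) ->
  line_int f x y 1 0 (s1 + s2) = (line_int f x y 1 0 s1 + line_int f (x + s1) y 1 0 s2)%C.
Proof.
  intros H1 H2 H. rewrite line_int_split; auto.
  - rewrite Rmult_1_r, Rmult_0_r, Rplus_0_r. reflexivity.
  - intros t Ht. rewrite Rmult_1_r, Rmult_0_r, Rplus_0_r. auto.
Qed.

Lemma line_int_split_v f x y s1 s2 : 0 <= s1 -> 0 <= s2 ->
  (forall t, 0 <= t <= s1 + s2 -> Ccont_at f (x, y + t)) ->
  line_int f x y 0 1 (s1 + s2) = (line_int f x y 0 1 s1 + line_int f x (y + s1) 0 1 s2)%C.
Proof.
  intros H1 H2 H. rewrite line_int_split; auto.
  - rewrite Rmult_1_r, Rmult_0_r, Rplus_0_r. reflexivity.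
  - intros t Ht. rewrite Rmult_1_r, Rmult_0_r, Rplus_0_r. auto.
Qed.

(* The integrals over interior edges cancel syntactically, so continuity is only needed on the
   outer boundary. *)
Lemma square_int_split2 f x y s : 0 <= s ->
  on_square_boundary (Ccont_at f) x y (s + s) ->
  square_int f x y (s + s)
  = (square_int f x y s + square_int f (x + s) y s
     + square_int f x (y + s) s + square_int f (x + s) (y + s) s)%C.
Proof.
  intros Hs HS. unfold square_int.
  rewrite (line_int_split_h f x y s s) by (auto; boundary_side HS).
  rewrite (line_int_split_v f (x + (s + s)) y s s) by (auto; boundary_side HS).
  rewrite (line_int_split_h f x (y + (s + s)) s s) by (auto; boundary_side HS).
  rewrite (line_int_split_v f x y s s) by (auto; boundary_side HS).
  replace (x + (s + s)) with (x + s + s) by ring.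
  replace (y + (s + s)) with (y + s + s) by ring.
  ring.
Qed.

Lemma square_int_split3 f x y s : 0 <= s ->
  on_square_boundary (Ccont_at f) x y (s + s + s) ->
  square_int f x y (s + s + s)
  = (square_int f x y s + square_int f (x + s) y s + square_int f (x + s + s) y s
     + square_int f x (y + s) s + square_int f (x + s) (y + s) s
     + square_int f (x + s + s) (y + s) s + square_int f x (y + s + s) s
     + square_int f (x + s) (y + s + s) s + square_int f (x + s + s) (y + s + s) s)%C.
Proof.
  intros Hs HS. unfold square_int.
  rewrite (line_int_split_h f x y (s + s) s) by (auto; try lra; boundary_side HS).
  rewrite (line_int_split_h f x y s s) by (auto; try lra; boundary_side HS).
  rewrite (line_int_split_v f (x + (s + s + s)) y (s + s) s) by (auto; try lra; boundary_side HS).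
  rewrite (line_int_split_v f (x + (s + s + s)) y s s) by (auto; try lra; boundary_side HS).
  rewrite (line_int_split_h f x (y + (s + s + s)) (s + s) s) by (auto; try lra; boundary_side HS).
  rewrite (line_int_split_h f x (y + (s + s + s)) s s) by (auto; try lra; boundary_side HS).
  rewrite (line_int_split_v f x y (s + s) s) by (auto; try lra; boundary_side HS).
  rewrite (line_int_split_v f x y s s) by (auto; try lra; boundary_side HS).
  replace (x + (s + s + s)) with (x + s + s + s) by ring.
  replace (y + (s + s + s)) with (y + s + s + s) by ring.
  replace (x + (s + s)) with (x + s + s) by ring.
  replace (y + (s + s)) with (y + s + s) by ring.
  ring.
Qed.

Lemma square_int_correct f x y s : 0 <= s -> on_square_boundary (Ccont_at f) x y s ->
  @is_RInt C_R_NormedModule (square_integrand f x y s) 0 s (square_int f x y s).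
Proof.
  intros Hs HS.
  pose proof (line_int_correct f x y 1 0 s Hs ltac:(boundary_side HS)) as I1.
  pose proof (line_int_correct f (x + s) y 0 1 s Hs ltac:(boundary_side HS)) as I2.
  pose proof (line_int_correct f x (y + s) 1 0 s Hs ltac:(boundary_side HS)) as I3.
  pose proof (line_int_correct f x y 0 1 s Hs ltac:(boundary_side HS)) as I4.
  apply (is_RInt_Cmult _ _ _ _ Ci) in I2. apply (is_RInt_Cmult _ _ _ _ Ci) in I4.
  pose proof (is_RInt_minus _ _ _ _ _ _
                (is_RInt_minus _ _ _ _ _ _ (is_RInt_plus _ _ _ _ _ _ I1 I2) I3) I4) as I.
  eapply is_RInt_ext; [|exact I].
  intros t _. unfold square_integrand; cbv zeta. rewrite !Rmult_1_r, !Rmult_0_r, !Rplus_0_r. reflexivity.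
Qed.

(* Opposite sides cancel the linear part pointwise. *)
Lemma square_integrand_sub_affine f x y s t (al be p : C) :
  square_integrand f x y s t = square_integrand (fun z => f z - al - be * (z - p))%C x y s t.
Proof.
  unfold square_integrand; cbv zeta.
  generalize (f (x + t, y)) (f (x + s, y + t)) (f (x + t, y + s)) (f (x, y + t)).
  intros [a1 a2] [b1 b2] [c1 c2] [d1 d2]. destruct al as [l1 l2], be as [m1 m2], p as [p1 p2].
  unfold Cminus, Cplus, Cmult, Copp, Ci; simpl. f_equal; ring.
Qed.

Lemma square_integrand_bound f x y s t M : 0 <= t <= s ->
  on_square_boundary (fun z => Cmod (f z) <= M) x y s ->
  Cmod (square_integrand f x y s t) <= 4 * M.
Proof.
  intros Ht H. destruct (H t Ht) as [A1 [A2 [A3 A4]]].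
  unfold square_integrand, Cminus; cbv zeta.
  eapply Rle_trans; [apply Cmod_triangle4|]. rewrite !Cmod_opp, !Cmod_Ci_mult. lra.
Qed.

Lemma square_int_bound_affine f x y s M al be p : 0 <= s ->
  on_square_boundary (Ccont_at f) x y s ->
  on_square_boundary (fun z => Cmod (f z - al - be * (z - p))%C <= M) x y s ->
  Cmod (square_int f x y s) <= s * (4 * M).
Proof.
  intros Hs HS H. rewrite <- norm_Cmod. replace s with (s - 0) at 2 by ring.
  apply (norm_RInt_le_const (square_integrand (fun z => f z - al - be * (z - p))%C x y s));
    auto.
  - intros t Ht. rewrite norm_Cmod. apply square_integrand_bound; auto.
  - eapply is_RInt_ext; [|exact (square_int_correct f x y s Hs HS)].
    intros t _. apply square_integrand_sub_affine.
Qed.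

Lemma square_int_bound f x y s M : 0 <= s ->
  on_square_boundary (Ccont_at f) x y s ->
  on_square_boundary (fun z => Cmod (f z) <= M) x y s ->
  Cmod (square_int f x y s) <= s * (4 * M).
Proof.
  intros Hs HS H. apply (square_int_bound_affine f x y s M 0 0 0); auto.
  assert (E : forall a b : C, (a - 0 - 0 * (b - 0))%C = a) by (intros; ring).
  intros t Ht. rewrite !E. auto.
Qed.

Lemma square_int_sub_scal f g x y s (c : C) : 0 <= s ->
  on_square_boundary (Ccont_at f) x y s -> on_square_boundary (Ccont_at g) x y s ->
  square_int (fun z => f z - c * g z)%C x y s = (square_int f x y s - c * square_int g x y s)%C.
Proof.
  intros Hs Hf Hg. unfold square_int.
  rewrite !line_int_sub_scal; auto; try boundary_side Hf; try boundary_side Hg.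
  ring.
Qed.

Lemma nested_intervals (a l : nat -> R) :
  (forall n, a n <= a (S n)) -> (forall n, a (S n) + l (S n) <= a n + l n) ->
  (forall n, 0 <= l n) -> exists p, forall n, a n <= p <= a n + l n.
Proof.
  intros Ha Hb Hl.
  assert (Mono : forall (g : nat -> R), (forall n, g n <= g (S n)) ->
                 forall m n, (m <= n)%nat -> g m <= g n).
  { intros g Hg m n Hmn. induction Hmn; [lra|]. eapply Rle_trans; eauto. }
  assert (Ub : forall m n, a m <= a n + l n).
  { intros m n. destruct (Nat.le_ge_cases m n) as [Hmn|Hmn].
    - pose proof (Mono a Ha m n Hmn). pose proof (Hl n). lra.
    - pose proof (Mono (fun k => - (a k + l k)) ltac:(intros k; pose proof (Hb k); lra) n m Hmn).
      pose proof (Hl m). simpl in *. lra. }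
  destruct (completeness (fun r => exists n, r = a n)) as [p [Hp1 Hp2]].
  - exists (a 0%nat + l 0%nat). intros r [n ->]. apply Ub.
  - exists (a 0%nat). exists 0%nat. reflexivity.
  - exists p. intros n. split.
    + apply Hp1. exists n. reflexivity.
    + apply Hp2. intros r [m ->]. apply Ub.
Qed.

Lemma geometric_lt (L q delta : R) : 1 < q -> 0 < delta -> exists N, L / q ^ N < delta.
Proof.
  intros Hq Hd.
  assert (Hq' : Rabs (/ q) < 1).
  { rewrite Rabs_pos_eq by (left; apply Rinv_0_lt_compat; lra).
    rewrite <- Rinv_1. apply Rinv_lt_contravar; lra. }
  pose proof (Rabs_pos L).
  destruct (pow_lt_1_zero (/ q) Hq' (delta / (Rabs L + 1))) as [N HN].
  { apply Rdiv_lt_0_compat; lra. }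
  exists N. specialize (HN N (Nat.le_refl N)).
  rewrite Rabs_pos_eq in HN by (apply pow_le; left; apply Rinv_0_lt_compat; lra).
  unfold Rdiv. rewrite <- pow_inv.
  pose proof (pow_le (/ q) N ltac:(left; apply Rinv_0_lt_compat; lra)).
  apply Rle_lt_trans with (Rabs L * (/ q) ^ N); [apply Rmult_le_compat_r; auto; apply Rle_abs|].
  apply Rle_lt_trans with (Rabs L * (delta / (Rabs L + 1))); [apply Rmult_le_compat_l; lra|].
  replace (Rabs L * (delta / (Rabs L + 1))) with (delta * (Rabs L / (Rabs L + 1)))
    by (field; lra).
  assert (Rabs L / (Rabs L + 1) < 1).
  { apply Rmult_lt_reg_r with (Rabs L + 1); [lra|].
    unfold Rdiv. rewrite Rmult_assoc, Rinv_l by lra. lra. }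
  nra.
Qed.

Section Goursat.
Variables (f : C -> C) (x y L : R).
Hypothesis HL : 0 < L.
Hypothesis Hhol : forall u v, x <= u <= x + L -> y <= v <= y + L -> exists d, is_cderiv f (u, v) d.

Lemma Ccont_on_subsquare a b s : x <= a -> a + s <= x + L -> y <= b -> b + s <= y + L ->
  0 <= s -> on_square_boundary (Ccont_at f) a b s.
Proof.
  intros H1 H2 H3 H4 Hs t Ht.
  assert (Hc : forall u v, a <= u <= a + s -> b <= v <= b + s -> Ccont_at f (u, v)).
  { intros u v Hu Hv. destruct (Hhol u v ltac:(lra) ltac:(lra)) as [d Hd].
    exact (is_cderiv_cont _ _ _ Hd). }
  repeat split; apply Hc; lra.
Qed.

Definition pick_quarter (c : R * R) (h : R) : R * R :=
  let (a, b) := c in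
  let whole := Cmod (square_int f a b (h + h)) in
  if Rle_dec whole (4 * Cmod (square_int f a b h)) then (a, b)
  else if Rle_dec whole (4 * Cmod (square_int f (a + h) b h)) then (a + h, b)
  else if Rle_dec whole (4 * Cmod (square_int f a (b + h) h)) then (a, b + h)
  else (a + h, b + h).

Lemma pick_quarter_spec a b h : 0 <= h -> on_square_boundary (Ccont_at f) a b (h + h) ->
  let c := pick_quarter (a, b) h in
  Cmod (square_int f a b (h + h)) <= 4 * Cmod (square_int f (fst c) (snd c) h) /\
  a <= fst c <= a + h /\ b <= snd c <= b + h.
Proof.
  intros Hh HS. pose proof (square_int_split2 f a b h Hh HS) as E.
  unfold pick_quarter. cbv zeta.
  destruct (Rle_dec _ _) as [H1|H1]; [simpl; repeat split; lra|].
  destruct (Rle_dec _ _) as [H2|H2]; [simpl; repeat split; lra|].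
  destruct (Rle_dec _ _) as [H3|H3]; [simpl; repeat split; lra|].
  simpl. split; [|repeat split; lra].
  rewrite E in *. pose proof (Cmod_triangle4 (square_int f a b h) (square_int f (a + h) b h)
    (square_int f a (b + h) h) (square_int f (a + h) (b + h) h)). lra.
Qed.

Definition side (n : nat) : R := L / 2 ^ n.

Fixpoint corner (n : nat) : R * R :=
  match n with
  | O => (x, y)
  | S m => pick_quarter (corner m) (side (S m))
  end.

Lemma side_pos n : 0 < side n.
Proof. unfold side. apply Rdiv_lt_0_compat; auto. apply pow_lt; lra. Qed.

Lemma side_S n : side (S n) + side (S n) = side n.
Proof. unfold side. simpl. field. apply pow_nonzero. lra. Qed.

Lemma corner_in_square n :
  x <= fst (corner n) /\ fst (corner n) + side n <= x + L /\
  y <= snd (corner n) /\ snd (corner n) + side n <= y + L.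
Proof.
  induction n as [|n IH].
  - simpl. unfold side. simpl. rewrite Rdiv_1_r. lra.
  - destruct IH as [A1 [A2 [A3 A4]]]. simpl corner.
    destruct (corner n) as [a b]. cbn [fst snd] in *.
    pose proof (side_S n). pose proof (side_pos (S n)).
    destruct (pick_quarter_spec a b (side (S n))) as [_ [B1 B2]];
      [lra|apply Ccont_on_subsquare; lra|].
    lra.
Qed.

Lemma corner_S n :
  fst (corner n) <= fst (corner (S n)) /\
  fst (corner (S n)) + side (S n) <= fst (corner n) + side n /\
  snd (corner n) <= snd (corner (S n)) /\
  snd (corner (S n)) + side (S n) <= snd (corner n) + side n /\
  Cmod (square_int f (fst (corner n)) (snd (corner n)) (side n))
  <= 4 * Cmod (square_int f (fst (corner (S n))) (snd (corner (S n))) (side (S n))).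
Proof.
  destruct (corner_in_square n) as [A1 [A2 [A3 A4]]].
  simpl corner. destruct (corner n) as [a b]. cbn [fst snd] in *.
  pose proof (side_S n) as E. pose proof (side_pos (S n)).
  destruct (pick_quarter_spec a b (side (S n))) as [B0 [B1 B2]];
    [lra|apply Ccont_on_subsquare; lra|].
  rewrite E in B0. repeat (split; [lra|]). exact B0.
Qed.

Lemma square_int_le_corner n :
  Cmod (square_int f x y L)
  <= (2 ^ n * 2 ^ n) * Cmod (square_int f (fst (corner n)) (snd (corner n)) (side n)).
Proof.
  induction n as [|n IH].
  - simpl. unfold side; simpl. rewrite Rdiv_1_r. lra.
  - destruct (corner_S n) as [_ [_ [_ [_ H]]]].
    eapply Rle_trans; [exact IH|]. simpl pow.
    assert (0 <= 2 ^ n * 2 ^ n) by (pose proof (pow_lt 2 n ltac:(lra)); nra).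
    apply Rmult_le_compat_l with (r := 2 ^ n * 2 ^ n) in H; auto. lra.
Qed.

Theorem goursat : square_int f x y L = 0%C.
Proof.
  destruct (nested_intervals (fun n => fst (corner n)) side) as [p1 P1].
  { intros n. apply corner_S. } { intros n. apply corner_S. }
  { intros n. left. apply side_pos. }
  destruct (nested_intervals (fun n => snd (corner n)) side) as [p2 P2].
  { intros n. apply corner_S. } { intros n. apply corner_S. }
  { intros n. left. apply side_pos. }
  destruct (corner_in_square 0) as [A1 [A2 [A3 A4]]].
  assert (Hp1 : x <= p1 <= x + L) by (pose proof (P1 0%nat); lra).
  assert (Hp2 : y <= p2 <= y + L) by (pose proof (P2 0%nat); lra).
  destruct (Hhol p1 p2 Hp1 Hp2) as [d Hd].
  apply (C_eq_0_of_le_eps _ (8 * (L * L))). intros eps Heps.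
  destruct (Hd eps Heps) as [delta [Hdelta Hdelta']].
  destruct (geometric_lt (2 * L) 2 delta ltac:(lra) Hdelta) as [N HN].
  assert (HsN : 2 * side N < delta) by (unfold side; unfold Rdiv in *; lra).
  destruct (corner_in_square N) as [B1 [B2 [B3 B4]]]. pose proof (side_pos N).
  assert (HB : Cmod (square_int f (fst (corner N)) (snd (corner N)) (side N))
               <= side N * (4 * (eps * (2 * side N)))).
  { apply (square_int_bound_affine f _ _ _ _ (f (p1, p2)) d (p1, p2)); [lra| |].
    { apply Ccont_on_subsquare; lra. }
    assert (Hbox : forall u v, fst (corner N) <= u <= fst (corner N) + side N ->
                     snd (corner N) <= v <= snd (corner N) + side N ->
                     Cmod (f (u, v) - f (p1, p2) - d * ((u, v) - (p1, p2)))%C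
                     <= eps * (2 * side N)).
    { intros u v Hu Hv. pose proof (P1 N). pose proof (P2 N).
      assert (Hh : Cmod ((u, v) - (p1, p2))%C <= 2 * side N).
      { eapply Rle_trans; [apply Cmod_sub_pair_le|].
        assert (Rabs (u - p1) <= side N) by (apply Rabs_le; lra).
        assert (Rabs (v - p2) <= side N) by (apply Rabs_le; lra). lra. }
      specialize (Hdelta' ((u, v) - (p1, p2))%C ltac:(lra)).
      replace ((p1, p2) + ((u, v) - (p1, p2)))%C with ((u, v) : C) in Hdelta'
        by (unfold Cplus, Cminus, Copp; simpl; f_equal; ring).
      eapply Rle_trans; [exact Hdelta'|]. apply Rmult_le_compat_l; lra. }
    intros t Ht. repeat split; apply Hbox; lra. }
  eapply Rle_trans; [apply (square_int_le_corner N)|].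
  assert (0 <= 2 ^ N * 2 ^ N) by (pose proof (pow_lt 2 N ltac:(lra)); nra).
  apply Rmult_le_compat_l with (r := 2 ^ N * 2 ^ N) in HB; auto.
  eapply Rle_trans; [exact HB|].
  unfold side. right. field. apply pow_nonzero; lra.
Qed.

End Goursat.

Lemma Cinv_pair (p q : R) : (/ (p, q))%C = ((p / (p * p + q * q))%R, (- q / (p * p + q * q))%R).
Proof. unfold Cinv; simpl. rewrite !Rmult_1_r. reflexivity. Qed.

Lemma half_inv_le_frac p a : 0 < a -> p * p <= a * a -> 1 / (2 * a) <= a / (p * p + a * a).
Proof.
  intros Ha Hp. replace (1 / (2 * a)) with (a * / (2 * a * a)) by (field; lra).
  unfold Rdiv. apply Rmult_le_compat_l; [lra|]. apply Rinv_le_contravar; nra.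
Qed.

Lemma Im_square_comb (a1 a2 a3 a4 : C) :
  Im (a1 + Ci * a2 - a3 - Ci * a4)%C = Im a1 + Re a2 - Im a3 - Re a4.
Proof. destruct a1, a2, a3, a4. unfold Cminus, Cplus, Cmult, Copp, Ci; simpl. ring. Qed.

Section Cauchy_estimate.
Variables (g g' : C -> C) (w1 w2 a K : R).
Hypothesis Ha : 0 < a.
Hypothesis Hg : forall u v, w1 - a <= u <= w1 + a -> w2 - a <= v <= w2 + a ->
  is_cderiv g (u, v) (g' (u, v)).
Hypothesis HK : forall u v, w1 - a <= u <= w1 + a -> w2 - a <= v <= w2 + a ->
  Cmod (g (u, v)) <= K.

Definition kernel (z : C) : C := Cinv (Cminus z (w1, w2)).
Definition quot (z : C) : C := Cmult (Cmult (Cminus (g z) (g (w1, w2))) (kernel z)) (kernel z).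
Definition remainder (z : C) : C := Cminus (quot z) (Cmult (g' (w1, w2)) (kernel z)).

Lemma pair_neq_center u v : (u <> w1 \/ v <> w2) -> (u, v) <> (w1, w2).
Proof. intros [H|H] E; injection E; intros; auto. Qed.

Lemma punctured_holomorphic u v :
  w1 - a <= u <= w1 + a -> w2 - a <= v <= w2 + a -> (u, v) <> (w1, w2) ->
  (exists d, is_cderiv remainder (u, v) d) /\ (exists d, is_cderiv quot (u, v) d) /\
  (exists d, is_cderiv kernel (u, v) d).
Proof.
  intros Hu Hv Hne.
  pose proof (is_cderiv_inv_sub (w1, w2) (u, v) Hne) as Hk.
  pose proof (is_cderiv_sub_const g _ _ (g (w1, w2)) (Hg u v Hu Hv)) as H1.
  pose proof (is_cderiv_mult _ _ _ _ _ (is_cderiv_mult _ _ _ _ _ H1 Hk) Hk) as H3.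
  pose proof (is_cderiv_sub_scal _ _ _ _ _ (g' (w1, w2)) H3 Hk) as H4.
  split; [eexists; exact H4|]. split; [eexists; exact H3|]. eexists; exact Hk.
Qed.

Lemma punctured_cont (F : C -> C) :
  (forall u v, w1 - a <= u <= w1 + a -> w2 - a <= v <= w2 + a -> (u, v) <> (w1, w2) ->
     exists d, is_cderiv F (u, v) d) ->
  forall u v, w1 - a <= u <= w1 + a -> w2 - a <= v <= w2 + a -> (u, v) <> (w1, w2) ->
  Ccont_at F (u, v).
Proof. intros HF u v Hu Hv Hne. destruct (HF u v Hu Hv Hne) as [d Hd]. exact (is_cderiv_cont _ _ _ Hd). Qed.

Lemma centered_square_boundary (P : C -> Prop) h : 0 < h <= a ->
  (forall u v, w1 - a <= u <= w1 + a -> w2 - a <= v <= w2 + a -> (u, v) <> (w1, w2) ->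
     P (u, v)) ->
  on_square_boundary P (w1 - h) (w2 - h) (2 * h).
Proof. intros Hh HP t Ht. repeat split; apply HP; try lra; apply pair_neq_center; lra. Qed.

Lemma Cmod_ge_on_centered_boundary h u v : 0 < h ->
  w1 - h <= u <= w1 + h -> w2 - h <= v <= w2 + h ->
  (u = w1 - h \/ u = w1 + h \/ v = w2 - h \/ v = w2 + h) -> h <= Cmod ((u, v) - (w1, w2))%C.
Proof.
  intros Hh Hu Hv Hb.
  pose proof (re_le_Cmod ((u, v) - (w1, w2))%C). pose proof (im_le_Cmod ((u, v) - (w1, w2))%C).
  rewrite Cminus_pair in *. simpl in *.
  destruct Hb as [E|[E|[E|E]]]; rewrite E in *.
  - replace (w1 - h - w1) with (- h) in * by ring. rewrite Rabs_Ropp, Rabs_pos_eq in * by lra. lra.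
  - replace (w1 + h - w1) with h in * by ring. rewrite Rabs_pos_eq in * by lra. lra.
  - replace (w2 - h - w2) with (- h) in * by ring. rewrite Rabs_Ropp, Rabs_pos_eq in * by lra. lra.
  - replace (w2 + h - w2) with h in * by ring. rewrite Rabs_pos_eq in * by lra. lra.
Qed.

Definition radius (n : nat) : R := a / 3 ^ n.

Lemma radius_pos n : 0 < radius n.
Proof. unfold radius. apply Rdiv_lt_0_compat; auto. apply pow_lt; lra. Qed.

Lemma radius_S n : radius n = 3 * radius (S n).
Proof. unfold radius. simpl. field. apply pow_nonzero. lra. Qed.

Lemma radius_le n : radius n <= a.
Proof.
  unfold radius. pose proof (pow_R1_Rle 3 n ltac:(lra)). unfold Rdiv.
  rewrite <- (Rmult_1_r a) at 2. apply Rmult_le_compat_l; [lra|].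
  rewrite <- Rinv_1. apply Rinv_le_contravar; lra.
Qed.

Lemma square_int_remainder_off_center X Y s : 0 < s ->
  w1 - a <= X -> X + s <= w1 + a -> w2 - a <= Y -> Y + s <= w2 + a ->
  (X + s < w1 \/ w1 < X \/ Y + s < w2 \/ w2 < Y) -> square_int remainder X Y s = 0%C.
Proof.
  intros Hs H1 H2 H3 H4 Hd. apply goursat; auto. intros u v Hu Hv.
  apply punctured_holomorphic; try lra. apply pair_neq_center.
  destruct Hd as [?|[?|[?|?]]]; [left|left|right|right]; lra.
Qed.

(* Cutting the square into nine and applying Goursat to the eight squares missing the centre. *)
Lemma square_int_remainder_shrink n :
  square_int remainder (w1 - a) (w2 - a) (2 * a)
  = square_int remainder (w1 - radius n) (w2 - radius n) (2 * radius n).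
Proof.
  induction n as [|n IH].
  - unfold radius. simpl. rewrite Rdiv_1_r. reflexivity.
  - rewrite IH. pose proof (radius_S n). pose proof (radius_pos (S n)). pose proof (radius_le n).
    set (s := 2 * radius (S n)).
    replace (2 * radius n) with (s + s + s) by (unfold s; lra).
    rewrite square_int_split3.
    2:{ unfold s; lra. }
    2:{ replace (s + s + s) with (2 * radius n) by (unfold s; lra).
        apply centered_square_boundary; [pose proof (radius_pos n); lra|].
        apply punctured_cont. intros. apply punctured_holomorphic; auto. }
    set (X := w1 - radius n). set (Y := w2 - radius n).
    rewrite (square_int_remainder_off_center X Y s),
      (square_int_remainder_off_center (X + s) Y s),
      (square_int_remainder_off_center (X + s + s) Y s),
      (square_int_remainder_off_center X (Y + s) s),
      (square_int_remainder_off_center (X + s + s) (Y + s) s),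
      (square_int_remainder_off_center X (Y + s + s) s),
      (square_int_remainder_off_center (X + s) (Y + s + s) s),
      (square_int_remainder_off_center (X + s + s) (Y + s + s) s)
      by (unfold X, Y, s;
          solve [lra | left; lra | right; left; lra | right; right; left; lra
                | right; right; right; lra]).
    replace (X + s) with (w1 - radius (S n)) by (unfold X, s; lra).
    replace (Y + s) with (w2 - radius (S n)) by (unfold Y, s; lra).
    ring.
Qed.

Lemma remainder_eq z : z <> (w1, w2) ->
  remainder z = ((g z - g (w1, w2) - g' (w1, w2) * (z - (w1, w2)))
                 / ((z - (w1, w2)) * (z - (w1, w2))))%C.
Proof.
  intros Hz. assert (Hn : (z - (w1, w2))%C <> 0%C).
  { intro E. apply Hz. replace z with ((z - (w1, w2)) + (w1, w2))%C by ring.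
    rewrite E. apply Cplus_0_l. }
  unfold remainder, quot, kernel. field. auto.
Qed.

Lemma remainder_bound_on_boundary eps delta h u v : 0 < eps -> 0 < h -> 2 * h < delta ->
  (forall k, Cmod k < delta ->
     Cmod (g ((w1, w2) + k) - g (w1, w2) - g' (w1, w2) * k)%C <= eps * Cmod k) ->
  w1 - h <= u <= w1 + h -> w2 - h <= v <= w2 + h ->
  (u = w1 - h \/ u = w1 + h \/ v = w2 - h \/ v = w2 + h) -> Cmod (remainder (u, v)) <= eps / h.
Proof.
  intros He Hh Hd Hder Hu Hv Hb.
  set (xi := ((u, v) - (w1, w2))%C).
  pose proof (Cmod_ge_on_centered_boundary h u v Hh Hu Hv Hb) as Hxi1. fold xi in Hxi1.
  assert (Hxi2 : Cmod xi < delta).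
  { unfold xi. eapply Rle_lt_trans; [apply Cmod_sub_pair_le|].
    assert (Rabs (u - w1) <= h) by (apply Rabs_le; lra).
    assert (Rabs (v - w2) <= h) by (apply Rabs_le; lra). lra. }
  assert (Hx0 : xi <> 0%C) by (intro E; rewrite E, Cmod_0 in Hxi1; lra).
  assert (Hne : (u, v) <> (w1, w2)).
  { intro E. apply Hx0. unfold xi. rewrite E, Cminus_pair, !Rminus_diag. reflexivity. }
  rewrite remainder_eq by auto. fold xi.
  specialize (Hder xi Hxi2).
  replace ((w1, w2) + xi)%C with ((u, v) : C) in Hder
    by (unfold xi, Cplus, Cminus, Copp; simpl; f_equal; ring).
  rewrite Cmod_div by (apply Cmult_neq_0; auto). rewrite Cmod_mult.
  apply Rmult_le_reg_r with (Cmod xi * Cmod xi); [nra|].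
  unfold Rdiv. rewrite Rmult_assoc, Rinv_l by nra. rewrite Rmult_1_r.
  eapply Rle_trans; [exact Hder|].
  replace (eps * / h * (Cmod xi * Cmod xi)) with (eps * Cmod xi * (Cmod xi / h)) by (field; lra).
  assert (1 <= Cmod xi / h).
  { apply Rmult_le_reg_r with h; auto. unfold Rdiv. rewrite Rmult_assoc, Rinv_l by lra. lra. }
  assert (0 <= eps * Cmod xi) by nra. nra.
Qed.

(* The integral over the small central squares tends to 0 since [remainder = O(eps / h)] on
   their boundaries, which have length [8 h]. *)
Lemma square_int_remainder_zero : square_int remainder (w1 - a) (w2 - a) (2 * a) = 0%C.
Proof.
  apply (C_eq_0_of_le_eps _ 8). intros eps He.
  destruct (Hg w1 w2 ltac:(lra) ltac:(lra) eps He) as [delta [Hd Hd']].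
  destruct (geometric_lt (2 * a) 3 delta ltac:(lra) Hd) as [N HN].
  pose proof (radius_pos N). pose proof (radius_le N).
  assert (HsN : 2 * radius N < delta) by (unfold radius; unfold Rdiv in *; lra).
  rewrite (square_int_remainder_shrink N).
  eapply Rle_trans.
  - apply (square_int_bound remainder _ _ _ (eps / radius N)); [lra| |].
    + apply centered_square_boundary; [lra|].
      apply punctured_cont. intros. apply punctured_holomorphic; auto.
    + intros t Ht. repeat split; (eapply remainder_bound_on_boundary; eauto; lra).
  - right. field. lra.
Qed.

Lemma quot_bound_on_boundary u v : w1 - a <= u <= w1 + a -> w2 - a <= v <= w2 + a ->
  (u = w1 - a \/ u = w1 + a \/ v = w2 - a \/ v = w2 + a) -> Cmod (quot (u, v)) <= 2 * K / (a * a).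
Proof.
  intros Hu Hv Hb. pose proof (Cmod_ge_on_centered_boundary a u v Ha Hu Hv Hb) as Hx.
  assert (Hx0 : ((u, v) - (w1, w2))%C <> 0%C) by (intro E; rewrite E, Cmod_0 in Hx; lra).
  unfold quot, kernel. rewrite !Cmod_mult. rewrite Cmod_inv by auto.
  assert (Hg2 : Cmod (g (u, v) - g (w1, w2))%C <= 2 * K).
  { unfold Cminus. eapply Rle_trans; [apply Cmod_triangle|]. rewrite Cmod_opp.
    pose proof (HK u v Hu Hv). pose proof (HK w1 w2 ltac:(lra) ltac:(lra)). lra. }
  set (m := Cmod ((u, v) - (w1, w2))%C) in *.
  assert (0 < / m <= / a) by (split; [apply Rinv_0_lt_compat|apply Rinv_le_contravar]; lra).
  pose proof (Cmod_ge_0 (g (u, v) - g (w1, w2))%C).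
  replace (2 * K / (a * a)) with (2 * K * / a * / a) by (field; lra).
  assert (Cmod (g (u, v) - g (w1, w2))%C * / m <= 2 * K * / a) by (apply Rmult_le_compat; lra).
  apply Rmult_le_compat; try lra. apply Rmult_le_pos; lra.
Qed.

Lemma kernel_pair u v : kernel (u, v) =
  (((u - w1) / ((u - w1) * (u - w1) + (v - w2) * (v - w2)))%R,
   (- (v - w2) / ((u - w1) * (u - w1) + (v - w2) * (v - w2)))%R).
Proof. unfold kernel. rewrite Cminus_pair, Cinv_pair. reflexivity. Qed.

(* Each side contributes at least [1] (the exact value of the integral is [2 pi i]). *)
Lemma Im_square_int_kernel : 4 <= Im (square_int kernel (w1 - a) (w2 - a) (2 * a)).
Proof.
  assert (Ck : on_square_boundary (Ccont_at kernel) (w1 - a) (w2 - a) (2 * a)).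
  { apply centered_square_boundary; [lra|]. apply punctured_cont. intros.
    apply punctured_holomorphic; auto. }
  unfold square_int. rewrite Im_square_comb.
  destruct (is_RInt_Re_Im _ _ _ _ (line_int_correct kernel (w1 - a) (w2 - a) 1 0 (2 * a)
    ltac:(lra) ltac:(boundary_side Ck))) as [_ I1].
  destruct (is_RInt_Re_Im _ _ _ _ (line_int_correct kernel (w1 - a + 2 * a) (w2 - a) 0 1 (2 * a)
    ltac:(lra) ltac:(boundary_side Ck))) as [I2 _].
  destruct (is_RInt_Re_Im _ _ _ _ (line_int_correct kernel (w1 - a) (w2 - a + 2 * a) 1 0 (2 * a)
    ltac:(lra) ltac:(boundary_side Ck))) as [_ I3].
  destruct (is_RInt_Re_Im _ _ _ _ (line_int_correct kernel (w1 - a) (w2 - a) 0 1 (2 * a)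
    ltac:(lra) ltac:(boundary_side Ck))) as [I4 _].
  apply is_RInt_ge_const with (m := 1 / (2 * a)) in I1; [|lra|].
  2:{ intros t Ht. rewrite Rmult_1_r, Rmult_0_r, Rplus_0_r, kernel_pair. simpl.
      replace (w2 - a - w2) with (- a) by ring. replace (w1 - a + t - w1) with (t - a) by ring.
      replace (- - a) with a by ring. replace (- a * - a) with (a * a) by ring.
      apply half_inv_le_frac; nra. }
  apply is_RInt_ge_const with (m := 1 / (2 * a)) in I2; [|lra|].
  2:{ intros t Ht. rewrite Rmult_1_r, Rmult_0_r, Rplus_0_r, kernel_pair. simpl.
      replace (w1 - a + 2 * a - w1) with a by ring. replace (w2 - a + t - w2) with (t - a) by ring.
      replace (a * a + (t - a) * (t - a)) with ((t - a) * (t - a) + a * a) by ring.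
      apply half_inv_le_frac; nra. }
  apply is_RInt_le_const with (m := - (1 / (2 * a))) in I3; [|lra|].
  2:{ intros t Ht. rewrite Rmult_1_r, Rmult_0_r, Rplus_0_r, kernel_pair. simpl.
      replace (w2 - a + 2 * a - w2) with a by ring. replace (w1 - a + t - w1) with (t - a) by ring.
      unfold Rdiv. rewrite Ropp_mult_distr_l_reverse. apply Ropp_le_contravar.
      apply half_inv_le_frac; nra. }
  apply is_RInt_le_const with (m := - (1 / (2 * a))) in I4; [|lra|].
  2:{ intros t Ht. rewrite Rmult_1_r, Rmult_0_r, Rplus_0_r, kernel_pair. simpl.
      replace (w1 - a - w1) with (- a) by ring. replace (w2 - a + t - w2) with (t - a) by ring.
      replace (- a * - a + (t - a) * (t - a)) with ((t - a) * (t - a) + a * a) by ring.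
      unfold Rdiv. rewrite Ropp_mult_distr_l_reverse. apply Ropp_le_contravar.
      apply half_inv_le_frac; nra. }
  replace (1 / (2 * a) * (2 * a)) with 1 in * by (field; lra).
  replace (- (1 / (2 * a)) * (2 * a)) with (-1) in * by (field; lra).
  lra.
Qed.

(* [remainder = quot - g'(w) kernel] has zero integral, so [g'(w) * (integral of kernel)] equals
   the integral of [quot], which is bounded using [|g| <= K]. *)
Theorem cauchy_estimate : Cmod (g' (w1, w2)) <= 4 * K / a.
Proof.
  assert (Cq : on_square_boundary (Ccont_at quot) (w1 - a) (w2 - a) (2 * a)).
  { apply centered_square_boundary; [lra|]. apply punctured_cont. intros.
    apply punctured_holomorphic; auto. }
  assert (Ck : on_square_boundary (Ccont_at kernel) (w1 - a) (w2 - a) (2 * a)).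
  { apply centered_square_boundary; [lra|]. apply punctured_cont. intros.
    apply punctured_holomorphic; auto. }
  pose proof (square_int_sub_scal quot kernel (w1 - a) (w2 - a) (2 * a) (g' (w1, w2))
                ltac:(lra) Cq Ck) as E.
  change (square_int (fun z => (quot z - g' (w1, w2) * kernel z)%C) (w1 - a) (w2 - a) (2 * a))
    with (square_int remainder (w1 - a) (w2 - a) (2 * a)) in E.
  rewrite square_int_remainder_zero in E.
  assert (Eq : square_int quot (w1 - a) (w2 - a) (2 * a)
               = (g' (w1, w2) * square_int kernel (w1 - a) (w2 - a) (2 * a))%C).
  { apply (f_equal (fun q => q + g' (w1, w2) * square_int kernel (w1 - a) (w2 - a) (2 * a))%C) in E.
    rewrite Cplus_0_l in E. rewrite E. ring. }
  assert (Bq : Cmod (square_int quot (w1 - a) (w2 - a) (2 * a)) <= 2 * a * (4 * (2 * K / (a * a)))).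
  { apply square_int_bound; [lra|exact Cq|]. intros t Ht.
    repeat split; apply quot_bound_on_boundary; lra. }
  assert (Bk : 4 <= Cmod (square_int kernel (w1 - a) (w2 - a) (2 * a))).
  { pose proof Im_square_int_kernel. pose proof (im_le_Cmod (square_int kernel (w1 - a) (w2 - a) (2 * a))).
    pose proof (Rle_abs (Im (square_int kernel (w1 - a) (w2 - a) (2 * a)))). lra. }
  rewrite Eq, Cmod_mult in Bq.
  replace (2 * a * (4 * (2 * K / (a * a)))) with (16 * (K / a)) in Bq by (field; lra).
  replace (4 * K / a) with (4 * (K / a)) by (field; lra).
  pose proof (Cmod_ge_0 (g' (w1, w2))). nra.
Qed.

End Cauchy_estimate.

Definition locally_bounded_in (Q : C -> C -> Prop) (Phi : C -> C -> R) (z0 z1 : C) : Prop :=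
  exists r, 0 < r /\ exists M, forall w0 w1, Cmod (w0 - z0)%C < r -> Cmod (w1 - z1)%C < r ->
    Q w0 w1 /\ Phi w0 w1 <= M.

Lemma locally_bounded_in_plus Q P1 P2 z0 z1 :
  locally_bounded_in Q P1 z0 z1 -> locally_bounded_in Q P2 z0 z1 ->
  locally_bounded_in Q (fun w0 w1 => P1 w0 w1 + P2 w0 w1) z0 z1.
Proof.
  intros [r1 [Hr1 [M1 H1]]] [r2 [Hr2 [M2 H2]]]. exists (Rmin r1 r2).
  split; [apply Rmin_pos; auto|]. exists (M1 + M2). intros w0 w1 Hw0 Hw1.
  pose proof (Rmin_l r1 r2). pose proof (Rmin_r r1 r2).
  destruct (H1 w0 w1 ltac:(lra) ltac:(lra)). destruct (H2 w0 w1 ltac:(lra) ltac:(lra)).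
  split; auto. lra.
Qed.

Definition clamp (lo hi v : R) : R := Rmax lo (Rmin hi v).

Lemma clamp_spec lo hi r v : lo <= hi -> 0 <= r -> lo - r <= v <= hi + r ->
  lo <= clamp lo hi v <= hi /\ Rabs (v - clamp lo hi v) <= r.
Proof.
  intros H1 H2 H3. unfold clamp, Rmax, Rmin.
  destruct (Rle_dec hi v); destruct (Rle_dec lo _); (split; [lra| apply Rabs_le; lra]).
Qed.

Section Box_bound.
Variables (Q : C -> C -> Prop) (Phi : C -> C -> R) (x0 x1 y0 y1 : R).
Hypothesis Hx : x0 <= x1.
Hypothesis Hy : y0 <= y1.
Hypothesis Hloc : forall z0 z1, x0 <= Re z0 <= x1 -> y0 <= Im z0 <= y1 ->
  x0 <= Re z1 <= x1 -> y0 <= Im z1 <= y1 -> locally_bounded_in Q Phi z0 z1.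

Let lo : Compactness.Tn 4 R := (x0, (y0, (x0, (y0, tt)))).
Let hi : Compactness.Tn 4 R := (x1, (y1, (x1, (y1, tt)))).
Let fst_point (t : Compactness.Tn 4 R) : C := (fst t, fst (snd t)).
Let snd_point (t : Compactness.Tn 4 R) : C := (fst (snd (snd t)), fst (snd (snd (snd t)))).

(* Cousin's lemma with a gauge [d] that encodes both a radius and the local bound [1 / d]. *)
Let good_gauge (t : Compactness.Tn 4 R) (d : posreal) : Prop := bounded_n 4 lo hi t ->
  forall w0 w1, Cmod (w0 - fst_point t)%C < 4 * d -> Cmod (w1 - snd_point t)%C < 4 * d ->
    Q w0 w1 /\ Phi w0 w1 <= / d.

Lemma good_gauge_ex t : exists d : posreal, good_gauge t d.
Proof.
  destruct (classic (bounded_n 4 lo hi t)) as [Hb|Hb].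
  - destruct t as [a [b [c [e []]]]]. simpl in Hb. destruct Hb as [Ha [Hb' [Hc [He _]]]].
    destruct (Hloc (a, b) (c, e) Ha Hb' Hc He) as [r [Hr [M HM]]].
    assert (Hd : 0 < Rmin (r / 4) (/ (Rabs M + 1))).
    { apply Rmin_pos; [lra|]. apply Rinv_0_lt_compat. pose proof (Rabs_pos M); lra. }
    exists (mkposreal _ Hd). intros _ w0 w1 H0 H1. simpl in H0, H1.
    pose proof (Rmin_l (r / 4) (/ (Rabs M + 1))). pose proof (Rmin_r (r / 4) (/ (Rabs M + 1))).
    destruct (HM w0 w1) as [HQ HP]; [unfold fst_point in H0; simpl in H0; lra|
                                     unfold snd_point in H1; simpl in H1; lra|].
    split; auto. simpl.
    assert (/ (/ (Rabs M + 1)) <= / Rmin (r / 4) (/ (Rabs M + 1)))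
      by (apply Rinv_le_contravar; auto).
    rewrite Rinv_inv in H3. pose proof (Rle_abs M). lra.
  - exists (mkposreal 1 Rlt_0_1). intros HH. contradiction.
Qed.

Let gauge (t : Compactness.Tn 4 R) : posreal :=
  proj1_sig (constructive_indefinite_description _ (good_gauge_ex t)).

Lemma gauge_good t : good_gauge t (gauge t).
Proof. unfold gauge. destruct (constructive_indefinite_description _ _). simpl. auto. Qed.

Lemma near_clamped_point (w t c : R) (d g : R) : Rabs (w - c) <= d / 2 -> Rabs (c - t) < g ->
  d <= g -> Rabs (w - t) < 2 * g.
Proof.
  intros H1 H2 H3. replace (w - t) with ((w - c) + (c - t)) by ring.
  pose proof (Rabs_triang (w - c) (c - t)). pose proof (Rabs_pos (c - t)). lra.
Qed.

Theorem box_bound : exists r, 0 < r /\ exists M, forall w0 w1,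
  x0 - r <= Re w0 <= x1 + r -> y0 - r <= Im w0 <= y1 + r ->
  x0 - r <= Re w1 <= x1 + r -> y0 - r <= Im w1 <= y1 + r ->
  Q w0 w1 /\ Phi w0 w1 <= M.
Proof.
  destruct (compactness_value 4 lo hi gauge) as [d Hd].
  exists (d / 2). split; [destruct d; simpl; lra|]. exists (/ d).
  intros w0 w1 H1 H2 H3 H4. pose proof (cond_pos d) as Hd0.
  destruct (clamp_spec x0 x1 (d / 2) (Re w0) Hx ltac:(lra) H1) as [C1 D1].
  destruct (clamp_spec y0 y1 (d / 2) (Im w0) Hy ltac:(lra) H2) as [C2 D2].
  destruct (clamp_spec x0 x1 (d / 2) (Re w1) Hx ltac:(lra) H3) as [C3 D3].
  destruct (clamp_spec y0 y1 (d / 2) (Im w1) Hy ltac:(lra) H4) as [C4 D4].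
  set (c := (clamp x0 x1 (Re w0), (clamp y0 y1 (Im w0),
            (clamp x0 x1 (Re w1), (clamp y0 y1 (Im w1), tt)))) : Compactness.Tn 4 R).
  specialize (Hd c ltac:(simpl; tauto)).
  apply NNPP. intro Hn. apply Hd. intros [t [Ht [Hct Hdt]]]. apply Hn.
  destruct (gauge_good t Ht w0 w1) as [GQ GP].
  - eapply Rle_lt_trans; [apply Cmod_le_Re_Im|].
    destruct t as [ta [tb [tc [td []]]]]. simpl in Hct. destruct Hct as [E1 [E2 _]].
    unfold fst_point. simpl. fold (Re w0) (Im w0).
    pose proof (near_clamped_point (Re w0) ta _ d _ D1 E1 Hdt).
    pose proof (near_clamped_point (Im w0) tb _ d _ D2 E2 Hdt). unfold Rminus in *. lra.
  - eapply Rle_lt_trans; [apply Cmod_le_Re_Im|].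
    destruct t as [ta [tb [tc [td []]]]]. simpl in Hct. destruct Hct as [_ [_ [E3 [E4 _]]]].
    unfold snd_point. simpl. fold (Re w1) (Im w1).
    pose proof (near_clamped_point (Re w1) tc _ d _ D3 E3 Hdt).
    pose proof (near_clamped_point (Im w1) td _ d _ D4 E4 Hdt). unfold Rminus in *. lra.
  - split; auto. eapply Rle_trans; [exact GP|]. apply Rinv_le_contravar; auto.
Qed.

End Box_bound.

Definition cdiff_at (F : C -> C -> C) (a b p0 p1 : C) : Prop :=
  forall eps, 0 < eps -> exists delta, 0 < delta /\
    forall h0 h1, Cmod h0 < delta -> Cmod h1 < delta ->
      Cmod (F (p0 + h0)%C (p1 + h1)%C - F p0 p1 - a * h0 - b * h1)%C <= eps * (Cmod h0 + Cmod h1).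

Lemma cdiff2_on_at U F A B z0 z1 : cdiff2_on U F A B -> U z0 z1 ->
  cdiff_at F (A z0 z1) (B z0 z1) z0 z1.
Proof. intros Hd Hu. exact (Hd z0 z1 Hu). Qed.

Lemma cdiff_at_slice0 F a b p0 p1 : cdiff_at F a b p0 p1 -> is_cderiv (fun u => F u p1) p0 a.
Proof.
  intros Hd eps Heps. destruct (Hd eps Heps) as [d [Hd0 Hd1]].
  exists d. split; auto. intros h Hh.
  specialize (Hd1 h 0%C Hh ltac:(rewrite Cmod_0; lra)).
  rewrite Cplus_0_r, Cmult_0_r, Cmod_0, Rplus_0_r in Hd1.
  replace (F (p0 + h)%C p1 - F p0 p1 - a * h)%C with (F (p0 + h)%C p1 - F p0 p1 - a * h - 0)%C
    by ring.
  exact Hd1.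
Qed.

Lemma cdiff_at_slice1 F a b p0 p1 : cdiff_at F a b p0 p1 -> is_cderiv (fun u => F p0 u) p1 b.
Proof.
  intros Hd eps Heps. destruct (Hd eps Heps) as [d [Hd0 Hd1]].
  exists d. split; auto. intros h Hh.
  specialize (Hd1 0%C h ltac:(rewrite Cmod_0; lra) Hh).
  rewrite Cplus_0_r, Cmult_0_r, Cmod_0, Rplus_0_l in Hd1.
  replace (F p0 (p1 + h)%C - F p0 p1 - b * h)%C with (F p0 (p1 + h)%C - F p0 p1 - 0 - b * h)%C
    by ring.
  exact Hd1.
Qed.

Lemma cdiff2_locally_bounded U F A B z0 z1 : openC2 U -> cdiff2_on U F A B -> U z0 z1 ->
  locally_bounded_in U (fun w0 w1 => Cmod (F w0 w1)) z0 z1.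
Proof.
  intros Ho Hd Hu. destruct (Ho z0 z1 Hu) as [e [He HeU]].
  destruct (Hd z0 z1 Hu 1 Rlt_0_1) as [d [Hd0 Hd1]].
  set (r := Rmin e d). assert (Hr : 0 < r) by (apply Rmin_pos; auto).
  exists r. split; auto.
  exists (Cmod (F z0 z1) + (Cmod (A z0 z1) + Cmod (B z0 z1) + 2) * r).
  intros w0 w1 Hw0 Hw1. pose proof (Rmin_l e d). pose proof (Rmin_r e d). fold r in H, H0.
  split; [apply HeU; lra|].
  specialize (Hd1 (w0 - z0)%C (w1 - z1)%C ltac:(lra) ltac:(lra)).
  replace (z0 + (w0 - z0))%C with w0 in Hd1 by ring.
  replace (z1 + (w1 - z1))%C with w1 in Hd1 by ring.
  set (h0 := (w0 - z0)%C) in *. set (h1 := (w1 - z1)%C) in *.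
  replace (F w0 w1) with (F z0 z1 + A z0 z1 * h0 + B z0 z1 * h1
                          + (F w0 w1 - F z0 z1 - A z0 z1 * h0 - B z0 z1 * h1))%C by ring.
  pose proof (Cmod_ge_0 h0). pose proof (Cmod_ge_0 h1).
  pose proof (Cmod_ge_0 (A z0 z1)). pose proof (Cmod_ge_0 (B z0 z1)).
  eapply Rle_trans; [apply Cmod_triangle4|]. rewrite !Cmod_mult.
  assert (Cmod (A z0 z1) * Cmod h0 <= Cmod (A z0 z1) * r) by (apply Rmult_le_compat_l; lra).
  assert (Cmod (B z0 z1) * Cmod h1 <= Cmod (B z0 z1) * r) by (apply Rmult_le_compat_l; lra).
  lra.
Qed.

Lemma cdiff_at_unique F a1 b1 a2 b2 p0 p1 :
  cdiff_at F a1 b1 p0 p1 -> cdiff_at F a2 b2 p0 p1 -> a1 = a2 /\ b1 = b2.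
Proof.
  intros H1 H2.
  assert (Small : forall eps, 0 < eps -> exists t, 0 < t /\ forall h0 h1,
     Cmod h0 <= t -> Cmod h1 <= t ->
     Cmod ((a1 - a2) * h0 + (b1 - b2) * h1)%C <= eps * (Cmod h0 + Cmod h1)).
  { intros eps Heps.
    destruct (H1 (eps / 2) ltac:(lra)) as [d1 [Hd1 Hd1']].
    destruct (H2 (eps / 2) ltac:(lra)) as [d2 [Hd2 Hd2']].
    exists (Rmin d1 d2 / 2). pose proof (Rmin_l d1 d2). pose proof (Rmin_r d1 d2).
    pose proof (Rmin_pos d1 d2 Hd1 Hd2). split; [lra|]. intros h0 h1 Hh0 Hh1.
    specialize (Hd1' h0 h1 ltac:(lra) ltac:(lra)). specialize (Hd2' h0 h1 ltac:(lra) ltac:(lra)).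
    replace ((a1 - a2) * h0 + (b1 - b2) * h1)%C
      with ((F (p0 + h0)%C (p1 + h1)%C - F p0 p1 - a2 * h0 - b2 * h1)
            - (F (p0 + h0)%C (p1 + h1)%C - F p0 p1 - a1 * h0 - b1 * h1))%C by ring.
    unfold Cminus at 1. eapply Rle_trans; [apply Cmod_triangle|]. rewrite Cmod_opp. lra. }
  assert (Coef : forall c : C, (forall eps, 0 < eps -> exists t, 0 < t /\
                   Cmod (c * RtoC t)%C <= eps * t) -> c = 0%C).
  { intros c Hc. apply (C_eq_0_of_le_eps c 1). intros eps Heps.
    destruct (Hc eps Heps) as [t [Ht Hct]].
    rewrite Cmod_mult, Cmod_R, Rabs_pos_eq in Hct by lra.
    apply Rmult_le_reg_r with t; auto. lra. }
  assert (Ct : forall t, 0 < t -> Cmod (RtoC t) = t)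
    by (intros; rewrite Cmod_R; apply Rabs_pos_eq; lra).
  split.
  - assert (E : (a1 - a2)%C = 0%C).
    { apply Coef. intros eps Heps. destruct (Small eps Heps) as [t [Ht Hs]]. exists t.
      split; auto. specialize (Hs (RtoC t) 0%C). rewrite Cmod_0, Ct in Hs by lra.
      replace ((a1 - a2) * RtoC t)%C with ((a1 - a2) * RtoC t + (b1 - b2) * 0)%C by ring.
      replace (eps * t) with (eps * (t + 0)) by ring. apply Hs; lra. }
    replace a1 with ((a1 - a2) + a2)%C by ring. rewrite E. ring.
  - assert (E : (b1 - b2)%C = 0%C).
    { apply Coef. intros eps Heps. destruct (Small eps Heps) as [t [Ht Hs]]. exists t.
      split; auto. specialize (Hs 0%C (RtoC t)). rewrite Cmod_0, Ct in Hs by lra.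
      replace ((b1 - b2) * RtoC t)%C with ((a1 - a2) * 0 + (b1 - b2) * RtoC t)%C by ring.
      replace (eps * t) with (eps * (0 + t)) by ring. apply Hs; lra. }
    replace b1 with ((b1 - b2) + b2)%C by ring. rewrite E. ring.
Qed.

Lemma cdiff_at_translate F a b p0 p1 q0 q1 :
  (exists rho, 0 < rho /\ forall h0 h1, Cmod h0 < rho -> Cmod h1 < rho ->
     F (p0 + h0)%C (p1 + h1)%C = F (q0 + h0)%C (q1 + h1)%C) ->
  cdiff_at F a b q0 q1 -> cdiff_at F a b p0 p1.
Proof.
  intros [rho [Hrho Heq]] Hq eps Heps. destruct (Hq eps Heps) as [d [Hd Hd']].
  exists (Rmin d rho). split; [apply Rmin_pos; auto|]. intros h0 h1 Hh0 Hh1.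
  pose proof (Rmin_l d rho). pose proof (Rmin_r d rho).
  rewrite (Heq h0 h1) by lra.
  replace (F p0 p1) with (F q0 q1).
  - apply Hd'; lra.
  - specialize (Heq 0%C 0%C ltac:(rewrite Cmod_0; lra) ltac:(rewrite Cmod_0; lra)).
    rewrite !Cplus_0_r in Heq. auto.
Qed.

Lemma reduce_mod_2PI (x : R) : exists n : Z, 0 <= x + 2 * PI * IZR n < 2 * PI.
Proof.
  pose proof PI_RGT_0. set (q := x / (2 * PI)). destruct (archimed q) as [A1 A2].
  exists (- (up q - 1))%Z. rewrite opp_IZR, minus_IZR. simpl.
  assert (E : x = 2 * PI * q) by (unfold q; field; lra).
  rewrite E. split.
  - assert (IZR (up q) - 1 <= q) by lra. nra.
  - assert (q < IZR (up q)) by lra. nra.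
Qed.

Lemma periodic_Z (S : C -> Prop) (F : C -> C) (p : R) :
  (forall z r, S z -> S (z + RtoC r)%C) -> (forall z, S z -> F (z + RtoC p)%C = F z) ->
  forall (n : Z) z, S z -> F (z + RtoC (p * IZR n))%C = F z.
Proof.
  intros HS HF.
  assert (Hnat : forall (n : nat) z, S z -> F (z + RtoC (p * INR n))%C = F z).
  { induction n as [|n IH]; intros z Hz.
    - simpl. rewrite Rmult_0_r. f_equal. ring.
    - rewrite S_INR.
      replace (z + RtoC (p * (INR n + 1)))%C with (z + RtoC (p * INR n) + RtoC p)%C
        by (rewrite !RtoC_mult, !RtoC_plus; ring).
      rewrite HF by auto. auto. }
  intros [|m|m] z Hz.
  - simpl. rewrite Rmult_0_r. f_equal. ring.
  - rewrite <- positive_nat_Z, <- INR_IZR_INZ. auto.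
  - set (w := (z + RtoC (p * IZR (Z.neg m)))%C).
    replace z with (w + RtoC (p * INR (Pos.to_nat m)))%C at 1.
    + symmetry. apply Hnat. apply HS. auto.
    + unfold w. rewrite <- Pos2Z.opp_pos, opp_IZR, <- positive_nat_Z, <- INR_IZR_INZ.
      rewrite !RtoC_mult, RtoC_opp. ring.
Qed.

Lemma inW_shift R0 z r : inW R0 z -> inW R0 (z + RtoC r)%C.
Proof. unfold inW. destruct z; simpl. rewrite Rplus_0_r. auto. Qed.

Lemma inW_RtoC R0 x : 0 < R0 -> inW R0 (RtoC x).
Proof. intros H. unfold inW; simpl. rewrite Rabs_R0. lra. Qed.

Lemma inW_inWcl R0 z : inW R0 z -> inWcl R0 z.
Proof. unfold inW, inWcl. lra. Qed.

Lemma inW_near R0 z0 z1 : inW R0 z0 -> inW R0 z1 -> exists rho, 0 < rho /\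
  forall h0 h1, Cmod h0 < rho -> Cmod h1 < rho -> inW R0 (z0 + h0)%C /\ inW R0 (z1 + h1)%C.
Proof.
  unfold inW. intros H0 H1. exists (Rmin (R0 - Rabs (Im z0)) (R0 - Rabs (Im z1))).
  split; [apply Rmin_pos; lra|]. intros h0 h1 Hh0 Hh1.
  pose proof (Rmin_l (R0 - Rabs (Im z0)) (R0 - Rabs (Im z1))).
  pose proof (Rmin_r (R0 - Rabs (Im z0)) (R0 - Rabs (Im z1))).
  pose proof (im_le_Cmod h0). pose proof (im_le_Cmod h1).
  destruct z0, z1, h0, h1; simpl in *.
  split; eapply Rle_lt_trans; try apply Rabs_triang; lra.
Qed.

Definition periodic_strip (R0 : R) (F : C -> C -> C) : Prop :=
  forall z0 z1, inW R0 z0 -> inW R0 z1 ->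
    F (z0 + RtoC (2 * PI))%C z1 = F z0 z1 /\ F z0 (z1 + RtoC (2 * PI))%C = F z0 z1.

Lemma periodic_strip_Z R0 F : periodic_strip R0 F -> forall (n m : Z) z0 z1,
  inW R0 z0 -> inW R0 z1 -> F (z0 + RtoC (2 * PI * IZR n))%C (z1 + RtoC (2 * PI * IZR m))%C = F z0 z1.
Proof.
  intros Hp n m z0 z1 H0 H1.
  rewrite (periodic_Z (inW R0) (fun u => F u (z1 + RtoC (2 * PI * IZR m))%C) (2 * PI))
    by (auto using inW_shift; intros z Hz; apply Hp; auto using inW_shift).
  apply (periodic_Z (inW R0) (fun u => F z0 u) (2 * PI)); auto using inW_shift.
  intros z Hz. apply Hp; auto.
Qed.

Lemma periodic_strip_reduce R0 F : periodic_strip R0 F -> forall z0 z1, inW R0 z0 -> inW R0 z1 ->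
  exists w0 w1, 0 <= Re w0 < 2 * PI /\ 0 <= Re w1 < 2 * PI /\ Im w0 = Im z0 /\ Im w1 = Im z1 /\
    F w0 w1 = F z0 z1.
Proof.
  intros Hp z0 z1 H0 H1.
  destruct (reduce_mod_2PI (Re z0)) as [n Hn]. destruct (reduce_mod_2PI (Re z1)) as [m Hm].
  exists (z0 + RtoC (2 * PI * IZR n))%C, (z1 + RtoC (2 * PI * IZR m))%C.
  split; [|split; [|split; [|split]]]; try (apply (periodic_strip_Z R0); auto);
    destruct z0, z1; simpl in *; lra.
Qed.

Lemma periodic_strip_deriv R0 U F A B :
  (forall z0 z1, inW R0 z0 -> inW R0 z1 -> U z0 z1) ->
  cdiff2_on U F A B -> periodic_strip R0 F -> periodic_strip R0 A /\ periodic_strip R0 B.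
Proof.
  intros HU Hd Hp.
  assert (K : forall z0 z1, inW R0 z0 -> inW R0 z1 ->
     (A (z0 + RtoC (2 * PI))%C z1 = A z0 z1 /\ B (z0 + RtoC (2 * PI))%C z1 = B z0 z1) /\
     (A z0 (z1 + RtoC (2 * PI))%C = A z0 z1 /\ B z0 (z1 + RtoC (2 * PI))%C = B z0 z1)).
  { intros z0 z1 H0 H1. destruct (inW_near R0 z0 z1 H0 H1) as [rho [Hrho Hnear]].
    split; apply (cdiff_at_unique F _ _ _ _ z0 z1); try (apply (cdiff2_on_at U); auto; apply HU; auto; fail).
    - apply (cdiff_at_translate F _ _ z0 z1 (z0 + RtoC (2 * PI))%C z1);
        [|apply (cdiff2_on_at U); auto; apply HU; auto using inW_shift].
      exists rho. split; auto. intros h0 h1 Hh0 Hh1. destruct (Hnear h0 h1 Hh0 Hh1).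
      replace (z0 + RtoC (2 * PI) + h0)%C with (z0 + h0 + RtoC (2 * PI))%C by ring.
      symmetry. apply Hp; auto.
    - apply (cdiff_at_translate F _ _ z0 z1 z0 (z1 + RtoC (2 * PI))%C);
        [|apply (cdiff2_on_at U); auto; apply HU; auto using inW_shift].
      exists rho. split; auto. intros h0 h1 Hh0 Hh1. destruct (Hnear h0 h1 Hh0 Hh1).
      replace (z1 + RtoC (2 * PI) + h1)%C with (z1 + h1 + RtoC (2 * PI))%C by ring.
      symmetry. apply Hp; auto. }
  split; intros z0 z1 H0 H1; destruct (K z0 z1 H0 H1) as [[? ?] [? ?]]; split; auto.
Qed.

Section Strip.
Variables (G : nat -> C -> C -> C) (D : nat -> nat -> C -> C -> C)
  (H : nat -> nat -> nat -> C -> C -> C) (R0 : R) (U : C -> C -> Prop).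
Hypothesis HR0 : 0 < R0.
Hypothesis HUo : openC2 U.
Hypothesis HUs : forall z0 z1, inWcl R0 z0 -> inWcl R0 z1 -> U z0 z1.
Hypothesis HUd : forall j, (j < 3)%nat ->
  cdiff2_on U (G j) (D j 0%nat) (D j 1%nat) /\
  cdiff2_on U (D j 0%nat) (H j 0%nat 0%nat) (H j 0%nat 1%nat) /\
  cdiff2_on U (D j 1%nat) (H j 1%nat 0%nat) (H j 1%nat 1%nat).
Hypothesis Hper : forall j z0 z1, (j < 3)%nat -> inWcl R0 z0 -> inWcl R0 z1 ->
  G j (z0 + RtoC (2 * PI))%C z1 = G j z0 z1 /\ G j z0 (z1 + RtoC (2 * PI))%C = G j z0 z1.

Lemma U_of_inW z0 z1 : inW R0 z0 -> inW R0 z1 -> U z0 z1.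
Proof. intros. apply HUs; apply inW_inWcl; auto. Qed.

Lemma D_cdiff j k : (j < 3)%nat -> (k < 2)%nat -> cdiff2_on U (D j k) (H j k 0%nat) (H j k 1%nat).
Proof. intros Hj Hk. destruct (HUd j Hj) as [_ [? ?]]. destruct k as [|[|k]]; auto; lia. Qed.

Lemma D_periodic j k : (j < 3)%nat -> (k < 2)%nat -> periodic_strip R0 (D j k).
Proof.
  intros Hj Hk. destruct (HUd j Hj) as [HG _].
  destruct (periodic_strip_deriv R0 U _ _ _ U_of_inW HG) as [P0 P1].
  { intros z0 z1 H0 H1. apply Hper; auto using inW_inWcl. }
  destruct k as [|[|k]]; auto; lia.
Qed.

Lemma H_periodic j k l : (j < 3)%nat -> (k < 2)%nat -> (l < 2)%nat -> periodic_strip R0 (H j k l).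
Proof.
  intros Hj Hk Hl.
  destruct (periodic_strip_deriv R0 U _ _ _ U_of_inW (D_cdiff j k Hj Hk) (D_periodic j k Hj Hk)).
  destruct l as [|[|l]]; auto; lia.
Qed.

Definition sum_Cmod_D (w0 w1 : C) : R :=
  Cmod (D 0%nat 0%nat w0 w1) + Cmod (D 0%nat 1%nat w0 w1) + Cmod (D 1%nat 0%nat w0 w1) +
  Cmod (D 1%nat 1%nat w0 w1) + Cmod (D 2%nat 0%nat w0 w1) + Cmod (D 2%nat 1%nat w0 w1).

Lemma D_bounded_near_box : exists r M, 0 < r /\ forall w0 w1,
  - r <= Re w0 <= 2 * PI + r -> - R0 - r <= Im w0 <= R0 + r ->
  - r <= Re w1 <= 2 * PI + r -> - R0 - r <= Im w1 <= R0 + r ->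
  U w0 w1 /\ forall j k, (j < 3)%nat -> (k < 2)%nat -> Cmod (D j k w0 w1) <= M.
Proof.
  pose proof PI_RGT_0.
  destruct (box_bound U sum_Cmod_D 0 (2 * PI) (- R0) R0) as [r [Hr [M HM]]]; try lra.
  { intros z0 z1 A1 A2 A3 A4.
    assert (Hu : U z0 z1) by (apply HUs; unfold inWcl; apply Rabs_le; lra).
    destruct (HUd 0%nat ltac:(lia)) as [_ [? ?]]. destruct (HUd 1%nat ltac:(lia)) as [_ [? ?]].
    destruct (HUd 2%nat ltac:(lia)) as [_ [? ?]].
    unfold sum_Cmod_D.
    repeat apply locally_bounded_in_plus; eapply cdiff2_locally_bounded; eauto. }
  exists r, M. split; auto. intros w0 w1 A1 A2 A3 A4.
  rewrite Rminus_0_l in HM. destruct (HM w0 w1 A1 A2 A3 A4) as [HU HP]. split; auto.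
  intros j k Hj Hk. unfold sum_Cmod_D in HP.
  pose proof (Cmod_ge_0 (D 0%nat 0%nat w0 w1)). pose proof (Cmod_ge_0 (D 0%nat 1%nat w0 w1)).
  pose proof (Cmod_ge_0 (D 1%nat 0%nat w0 w1)). pose proof (Cmod_ge_0 (D 1%nat 1%nat w0 w1)).
  pose proof (Cmod_ge_0 (D 2%nat 0%nat w0 w1)). pose proof (Cmod_ge_0 (D 2%nat 1%nat w0 w1)).
  destruct j as [|[|[|j]]]; try lia; destruct k as [|[|k]]; try lia; lra.
Qed.

Section Bounds.
Variables (r M : R).
Hypothesis Hr : 0 < r.
Hypothesis HrM : forall w0 w1,
  - r <= Re w0 <= 2 * PI + r -> - R0 - r <= Im w0 <= R0 + r ->
  - r <= Re w1 <= 2 * PI + r -> - R0 - r <= Im w1 <= R0 + r ->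
  U w0 w1 /\ forall j k, (j < 3)%nat -> (k < 2)%nat -> Cmod (D j k w0 w1) <= M.

Lemma D_bound_strip j k z0 z1 : (j < 3)%nat -> (k < 2)%nat -> inW R0 z0 -> inW R0 z1 ->
  Cmod (D j k z0 z1) <= M.
Proof.
  intros Hj Hk H0 H1.
  destruct (periodic_strip_reduce R0 _ (D_periodic j k Hj Hk) z0 z1 H0 H1)
    as [w0 [w1 [A1 [A2 [A3 [A4 E]]]]]].
  rewrite <- E. unfold inW in *. destruct (Rabs_def2 _ _ H0). destruct (Rabs_def2 _ _ H1).
  apply (HrM w0 w1); auto; lra.
Qed.

(* [H] is not assumed continuous; it is bounded by the Cauchy estimate, one variable at a time. *)
Lemma H_bound_strip j k l z0 z1 : (j < 3)%nat -> (k < 2)%nat -> (l < 2)%nat ->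
  inW R0 z0 -> inW R0 z1 -> Cmod (H j k l z0 z1) <= 4 * M / r.
Proof.
  intros Hj Hk Hl H0 H1. pose proof (D_cdiff j k Hj Hk) as Cd.
  destruct (periodic_strip_reduce R0 _ (H_periodic j k l Hj Hk Hl) z0 z1 H0 H1)
    as [w0 [w1 [A1 [A2 [A3 [A4 E]]]]]].
  rewrite <- E. unfold inW in *. destruct (Rabs_def2 _ _ H0). destruct (Rabs_def2 _ _ H1).
  destruct l as [|[|l]]; [| |lia].
  - destruct w0 as [p q]. simpl in A1, A3.
    apply (cauchy_estimate (fun u => D j k u w1) (fun u => H j k 0%nat u w1) p q r M Hr).
    + intros u v Hu Hv. apply (cdiff_at_slice0 _ _ (H j k 1%nat (u, v) w1)).
      apply (cdiff2_on_at U); auto. apply (HrM (u, v) w1); simpl; lra.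
    + intros u v Hu Hv. apply (HrM (u, v) w1); simpl; auto; lra.
  - destruct w1 as [p q]. simpl in A2, A4.
    apply (cauchy_estimate (fun u => D j k w0 u) (fun u => H j k 1%nat w0 u) p q r M Hr).
    + intros u v Hu Hv. apply (cdiff_at_slice1 _ (H j k 0%nat w0 (u, v))).
      apply (cdiff2_on_at U); auto. apply (HrM w0 (u, v)); simpl; lra.
    + intros u v Hu Hv. apply (HrM w0 (u, v)); simpl; auto; lra.
Qed.

End Bounds.
End Strip.

Lemma Lub_Rbar_real_bounds (E : R -> Prop) x B : E x -> (forall y, E y -> y <= B) ->
  x <= real (Lub_Rbar E) /\ real (Lub_Rbar E) <= B.
Proof.
  intros Hx HB. destruct (Lub_Rbar_correct E) as [Hub Hlub].
  assert (L1 : Rbar_le x (Lub_Rbar E)) by (apply Hub; auto).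
  assert (L2 : Rbar_le (Lub_Rbar E) B) by (apply Hlub; intros y Hy; simpl; apply HB; auto).
  destruct (Lub_Rbar E) as [l| |]; simpl in *; try contradiction. auto.
Qed.

Lemma Cauchy_Schwarz2 A B x y : 0 <= A -> 0 <= B ->
  A * Rabs x + B * Rabs y <= sqrt (A ^ 2 + B ^ 2) * sqrt (x ^ 2 + y ^ 2).
Proof.
  intros HA HB. rewrite <- sqrt_mult_alt by nra.
  pose proof (Rabs_pos x). pose proof (Rabs_pos y).
  rewrite <- (sqrt_pow2 (A * Rabs x + B * Rabs y)) by nra.
  apply sqrt_le_1_alt. rewrite <- (pow2_abs x), <- (pow2_abs y).
  pose proof (Rle_0_sqr (A * Rabs y - B * Rabs x)). unfold Rsqr in *. nra.
Qed.

Lemma Cauchy_Schwarz3 a0 a1 a2 b0 b1 b2 :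
  a0 * b0 + a1 * b1 + a2 * b2 <= sqrt (a0 ^ 2 + a1 ^ 2 + a2 ^ 2) * sqrt (b0 ^ 2 + b1 ^ 2 + b2 ^ 2).
Proof.
  rewrite <- sqrt_mult_alt by nra.
  destruct (Rle_lt_dec (a0 * b0 + a1 * b1 + a2 * b2) 0); [pose proof (sqrt_pos
    ((a0 ^ 2 + a1 ^ 2 + a2 ^ 2) * (b0 ^ 2 + b1 ^ 2 + b2 ^ 2))); lra|].
  rewrite <- (sqrt_pow2 (a0 * b0 + a1 * b1 + a2 * b2)) by lra.
  apply sqrt_le_1_alt.
  pose proof (Rle_0_sqr (a0 * b1 - a1 * b0)). pose proof (Rle_0_sqr (a0 * b2 - a2 * b0)).
  pose proof (Rle_0_sqr (a1 * b2 - a2 * b1)). unfold Rsqr in *. nra.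
Qed.

Lemma vnorm2_nonneg a b : 0 <= vnorm2 a b.
Proof. apply sqrt_pos. Qed.

Lemma Cmod_le_vnorm2_l a b : Cmod a <= vnorm2 a b.
Proof.
  unfold vnorm2. rewrite <- (sqrt_pow2 (Cmod a)) at 1 by apply Cmod_ge_0.
  apply sqrt_le_1_alt. pose proof (pow2_ge_0 (Cmod b)). lra.
Qed.

Lemma Cmod_le_vnorm2_r a b : Cmod b <= vnorm2 a b.
Proof.
  unfold vnorm2. rewrite <- (sqrt_pow2 (Cmod b)) at 1 by apply Cmod_ge_0.
  apply sqrt_le_1_alt. pose proof (pow2_ge_0 (Cmod a)). lra.
Qed.

Lemma vnorm2_le_sum a b : vnorm2 a b <= Cmod a + Cmod b.
Proof.
  unfold vnorm2. pose proof (Cmod_ge_0 a). pose proof (Cmod_ge_0 b).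
  rewrite <- (sqrt_pow2 (Cmod a + Cmod b)) by lra. apply sqrt_le_1_alt. nra.
Qed.

Lemma vnorm2_scal (c a b : C) : vnorm2 (c * a)%C (c * b)%C = Cmod c * vnorm2 a b.
Proof.
  unfold vnorm2. rewrite !Cmod_mult. rewrite <- (sqrt_pow2 (Cmod c)) at 3 by apply Cmod_ge_0.
  rewrite <- sqrt_mult_alt by apply pow2_ge_0. f_equal. ring.
Qed.

Lemma vnorm2_Ci_RtoC (y0 y1 : R) : vnorm2 (Ci * RtoC y0)%C (Ci * RtoC y1)%C = sqrt (y0 ^ 2 + y1 ^ 2).
Proof. rewrite vnorm2_scal, Cmod_Ci, Rmult_1_l. unfold vnorm2. rewrite !Cmod_R, !pow2_abs. reflexivity. Qed.

Lemma Cmod_dot_le (a b : C) (t0 t1 : R) :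
  Cmod (a * RtoC t0 + b * RtoC t1)%C <= vnorm2 a b * sqrt (t0 ^ 2 + t1 ^ 2).
Proof.
  eapply Rle_trans; [apply Cmod_triangle|]. rewrite !Cmod_mult, !Cmod_R.
  apply Cauchy_Schwarz2; apply Cmod_ge_0.
Qed.

Lemma vnorm2_mx_le_sum p q r s (v0 v1 : C) : vnorm2 v0 v1 = 1 ->
  vnorm2 (p * v0 + q * v1)%C (r * v0 + s * v1)%C <= Cmod p + Cmod q + Cmod r + Cmod s.
Proof.
  intros Hv. pose proof (Cmod_le_vnorm2_l v0 v1). pose proof (Cmod_le_vnorm2_r v0 v1).
  pose proof (Cmod_ge_0 v0). pose proof (Cmod_ge_0 v1).
  pose proof (Cmod_ge_0 p). pose proof (Cmod_ge_0 q). pose proof (Cmod_ge_0 r). pose proof (Cmod_ge_0 s).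
  eapply Rle_trans; [apply vnorm2_le_sum|].
  pose proof (Cmod_triangle (p * v0) (q * v1)). pose proof (Cmod_triangle (r * v0) (s * v1)).
  rewrite !Cmod_mult in *. nra.
Qed.

Lemma mxnorm2_bounds p q r s (v0 v1 : C) : vnorm2 v0 v1 = 1 ->
  vnorm2 (p * v0 + q * v1)%C (r * v0 + s * v1)%C <= mxnorm2 p q r s /\
  mxnorm2 p q r s <= Cmod p + Cmod q + Cmod r + Cmod s.
Proof.
  intros Hv. apply Lub_Rbar_real_bounds.
  - exists v0, v1. split; auto.
  - intros y [w0 [w1 [Hw ->]]]. apply vnorm2_mx_le_sum; auto.
Qed.

Lemma vnorm2_1_0 : vnorm2 1 0 = 1.
Proof. unfold vnorm2. rewrite Cmod_1, Cmod_0. replace (1 ^ 2 + 0 ^ 2) with 1 by ring. apply sqrt_1. Qed.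

Lemma mxnorm2_le_sum p q r s : 0 <= mxnorm2 p q r s <= Cmod p + Cmod q + Cmod r + Cmod s.
Proof.
  destruct (mxnorm2_bounds p q r s 1 0 vnorm2_1_0) as [L1 L2].
  pose proof (vnorm2_nonneg (p * 1 + q * 0)%C (r * 1 + s * 0)%C). lra.
Qed.

Lemma vnorm2_mx_le p q r s (v0 v1 : C) :
  vnorm2 (p * v0 + q * v1)%C (r * v0 + s * v1)%C <= mxnorm2 p q r s * vnorm2 v0 v1.
Proof.
  pose proof (vnorm2_nonneg v0 v1) as Hn.
  destruct (Req_dec (vnorm2 v0 v1) 0) as [Z|Z].
  - pose proof (Cmod_le_vnorm2_l v0 v1). pose proof (Cmod_le_vnorm2_r v0 v1).
    pose proof (Cmod_ge_0 v0). pose proof (Cmod_ge_0 v1).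
    assert (E0 : v0 = 0%C) by (apply Cmod_eq_0; lra).
    assert (E1 : v1 = 0%C) by (apply Cmod_eq_0; lra).
    subst. rewrite Z, !Cmult_0_r, !Cplus_0_r.
    unfold vnorm2. rewrite Cmod_0. replace (0 ^ 2 + 0 ^ 2) with 0 by ring. rewrite sqrt_0. lra.
  - set (n := vnorm2 v0 v1) in *.
    assert (En : (RtoC n * RtoC (/ n))%C = 1%C) by (rewrite <- RtoC_mult, Rinv_r; auto).
    set (u0 := (RtoC (/ n) * v0)%C). set (u1 := (RtoC (/ n) * v1)%C).
    assert (Hu : vnorm2 u0 u1 = 1).
    { unfold u0, u1. rewrite vnorm2_scal, Cmod_R, Rabs_pos_eq by (left; apply Rinv_0_lt_compat; lra).
      fold n. field. auto. }
    replace (p * v0 + q * v1)%C with (RtoC n * (p * u0 + q * u1))%C.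
    2:{ unfold u0, u1. transitivity ((RtoC n * RtoC (/ n)) * (p * v0 + q * v1))%C; [ring|].
        rewrite En. ring. }
    replace (r * v0 + s * v1)%C with (RtoC n * (r * u0 + s * u1))%C.
    2:{ unfold u0, u1. transitivity ((RtoC n * RtoC (/ n)) * (r * v0 + s * v1))%C; [ring|].
        rewrite En. ring. }
    rewrite vnorm2_scal, Cmod_R, Rabs_pos_eq by lra. rewrite Rmult_comm.
    apply Rmult_le_compat_r; [lra|]. apply (mxnorm2_bounds p q r s u0 u1 Hu).
Qed.

Definition is_Rderiv_C (phi : R -> C) (s : R) (d : C) : Prop :=
  forall eps, 0 < eps -> exists delta, 0 < delta /\ forall h, Rabs h < delta ->
    Cmod (phi (s + h)%R - phi s - RtoC h * d)%C <= eps * Rabs h.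

Lemma is_Rderiv_C_Re_conj_mult (phi : R -> C) (c d : C) s : is_Rderiv_C phi s d ->
  derivable_pt_lim (fun u => Re (Cconj c * phi u)%C) s (Re (Cconj c * d)%C).
Proof.
  intros Hd eps Heps. pose proof (Cmod_ge_0 c).
  destruct (Hd (eps / 2 / (Cmod c + 1))) as [delta [Hd0 Hd1]].
  { apply Rdiv_lt_0_compat; lra. }
  exists (mkposreal delta Hd0). intros h Hh0 Hh. simpl in Hh. specialize (Hd1 h Hh).
  assert (E : (Re (Cconj c * phi (s + h)%R)%C - Re (Cconj c * phi s)%C) / h - Re (Cconj c * d)%C
              = Re (Cconj c * (phi (s + h)%R - phi s - RtoC h * d))%C / h).
  { destruct c as [a b], (phi (s + h)%R) as [p q], (phi s) as [u v], d as [m n].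
    unfold Cconj, Cmult, Cminus, Cplus, Copp, RtoC; simpl. field. auto. }
  rewrite E. unfold Rdiv. rewrite Rabs_mult, Rabs_inv.
  pose proof (re_le_Cmod (Cconj c * (phi (s + h)%R - phi s - RtoC h * d))%C) as R1.
  rewrite Cmod_mult, Cmod_conj in R1.
  assert (0 < Rabs h) by (apply Rabs_pos_lt; auto).
  apply Rmult_lt_reg_r with (Rabs h); auto.
  rewrite Rmult_assoc, Rinv_l, Rmult_1_r by lra.
  eapply Rle_lt_trans; [exact R1|].
  apply Rle_lt_trans with (Cmod c * (eps / 2 * Rabs h / (Cmod c + 1))).
  - replace (eps / 2 * Rabs h / (Cmod c + 1)) with (eps / 2 / (Cmod c + 1) * Rabs h)
      by (field; lra).
    apply Rmult_le_compat_l; auto.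
  - pose proof (mult_div_le (Cmod c) (Cmod c + 1) (eps / 2 * Rabs h)). nra.
Qed.

(* The real mean value theorem applied to [Re (conj (phi 1 - phi 0) * phi)]. *)
Lemma mean_value_ineq_C (phi phi' : R -> C) M :
  (forall s, 0 <= s <= 1 -> is_Rderiv_C phi s (phi' s)) ->
  (forall s, 0 <= s <= 1 -> Cmod (phi' s) <= M) -> Cmod (phi 1 - phi 0)%C <= M.
Proof.
  intros Hd HM. set (Dl := (phi 1 - phi 0)%C).
  destruct (Req_dec (Cmod Dl) 0) as [Z|Z].
  { rewrite Z. pose proof (HM 0 ltac:(lra)). pose proof (Cmod_ge_0 (phi' 0)). lra. }
  pose proof (Cmod_ge_0 Dl) as HD0.
  set (g := fun s => Re (Cconj Dl * phi s)%C). set (g' := fun s => Re (Cconj Dl * phi' s)%C).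
  assert (Hg : forall s, 0 <= s <= 1 -> derivable_pt_lim g s (g' s))
    by (intros; apply is_Rderiv_C_Re_conj_mult; auto).
  destruct (MVT_gen g 0 1 g') as [c [Hc Ec]].
  - intros x Hx. rewrite Rmin_left, Rmax_right in Hx by lra. apply is_derive_Reals. apply Hg. lra.
  - intros x Hx. rewrite Rmin_left, Rmax_right in Hx by lra. apply derivable_continuous_pt.
    exists (g' x). apply Hg. auto.
  - rewrite Rmin_left, Rmax_right in Hc by lra.
    assert (E1 : g 1 - g 0 = Cmod Dl ^ 2).
    { unfold g. rewrite Cmod2_alt. unfold Dl. destruct (phi 1) as [p q], (phi 0) as [u v].
      unfold Cconj, Cmult, Cminus, Cplus, Copp; simpl. ring. }
    assert (E2 : g' c <= Cmod Dl * M).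
    { unfold g'. eapply Rle_trans; [apply Rle_abs|]. eapply Rle_trans; [apply re_le_Cmod|].
      rewrite Cmod_mult, Cmod_conj. apply Rmult_le_compat_l; auto. }
    rewrite E1, Rminus_0_r, Rmult_1_r in Ec. simpl in Ec. nra.
Qed.

Lemma is_Rderiv_C_lin_comb (p1 p2 : R -> C) d1 d2 (c1 c2 : C) s :
  is_Rderiv_C p1 s d1 -> is_Rderiv_C p2 s d2 ->
  is_Rderiv_C (fun u => c1 * p1 u + c2 * p2 u)%C s (c1 * d1 + c2 * d2)%C.
Proof.
  intros H1 H2 eps Heps.
  set (K := Cmod c1 + Cmod c2 + 1).
  pose proof (Cmod_ge_0 c1). pose proof (Cmod_ge_0 c2).
  assert (HK : 0 < K) by (unfold K; lra).
  destruct (H1 (eps / K) ltac:(apply Rdiv_lt_0_compat; lra)) as [a1 [Ha1 Ha1']].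
  destruct (H2 (eps / K) ltac:(apply Rdiv_lt_0_compat; lra)) as [a2 [Ha2 Ha2']].
  exists (Rmin a1 a2). split; [apply Rmin_pos; auto|]. intros h Hh.
  pose proof (Rmin_l a1 a2). pose proof (Rmin_r a1 a2).
  specialize (Ha1' h ltac:(lra)). specialize (Ha2' h ltac:(lra)).
  replace (c1 * p1 (s + h)%R + c2 * p2 (s + h)%R - (c1 * p1 s + c2 * p2 s) - RtoC h * (c1 * d1 + c2 * d2))%C
    with (c1 * (p1 (s + h)%R - p1 s - RtoC h * d1) + c2 * (p2 (s + h)%R - p2 s - RtoC h * d2))%C
    by ring.
  eapply Rle_trans; [apply Cmod_triangle|]. rewrite !Cmod_mult. pose proof (Rabs_pos h).
  assert (Cmod c1 * Cmod (p1 (s + h)%R - p1 s - RtoC h * d1)%C <= Cmod c1 * (eps / K * Rabs h))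
    by (apply Rmult_le_compat_l; auto).
  assert (Cmod c2 * Cmod (p2 (s + h)%R - p2 s - RtoC h * d2)%C <= Cmod c2 * (eps / K * Rabs h))
    by (apply Rmult_le_compat_l; auto).
  assert ((Cmod c1 + Cmod c2) * (eps * Rabs h / K) <= eps * Rabs h)
    by (apply mult_div_le; unfold K; nra).
  replace (eps / K * Rabs h) with (eps * Rabs h / K) in * by (field; lra). nra.
Qed.

Lemma cdiff2_on_line_deriv U F A B (p0 p1 q0 q1 : C) s : cdiff2_on U F A B ->
  U (p0 + RtoC s * q0)%C (p1 + RtoC s * q1)%C ->
  is_Rderiv_C (fun u => F (p0 + RtoC u * q0)%C (p1 + RtoC u * q1)%C) s
    (A (p0 + RtoC s * q0)%C (p1 + RtoC s * q1)%C * q0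
     + B (p0 + RtoC s * q0)%C (p1 + RtoC s * q1)%C * q1)%C.
Proof.
  intros Hd HU eps Heps.
  set (K := Cmod q0 + Cmod q1 + 1).
  pose proof (Cmod_ge_0 q0). pose proof (Cmod_ge_0 q1).
  assert (HK : 0 < K) by (unfold K; lra).
  destruct (Hd _ _ HU (eps / K) ltac:(apply Rdiv_lt_0_compat; lra)) as [d [Hd0 Hd1]].
  exists (d / K). split; [apply Rdiv_lt_0_compat; lra|]. intros h Hh. pose proof (Rabs_pos h).
  assert (Hsmall : forall q, Cmod q < K -> Cmod (RtoC h * q)%C < d).
  { intros q Hq. rewrite Cmod_mult, Cmod_R.
    apply Rle_lt_trans with (Rabs h * K); [pose proof (Cmod_ge_0 q); nra|].
    apply Rmult_lt_reg_r with (/ K); [apply Rinv_0_lt_compat; lra|].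
    replace (Rabs h * K * / K) with (Rabs h) by (field; lra). exact Hh. }
  specialize (Hd1 _ _ (Hsmall q0 ltac:(unfold K; lra)) (Hsmall q1 ltac:(unfold K; lra))).
  replace (p0 + RtoC (s + h) * q0)%C with (p0 + RtoC s * q0 + RtoC h * q0)%C
    by (rewrite RtoC_plus; ring).
  replace (p1 + RtoC (s + h) * q1)%C with (p1 + RtoC s * q1 + RtoC h * q1)%C
    by (rewrite RtoC_plus; ring).
  set (P0 := (p0 + RtoC s * q0)%C) in *. set (P1 := (p1 + RtoC s * q1)%C) in *.
  replace (F (P0 + RtoC h * q0)%C (P1 + RtoC h * q1)%C - F P0 P1
           - RtoC h * (A P0 P1 * q0 + B P0 P1 * q1))%C
    with (F (P0 + RtoC h * q0)%C (P1 + RtoC h * q1)%C - F P0 P1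
          - A P0 P1 * (RtoC h * q0) - B P0 P1 * (RtoC h * q1))%C by ring.
  eapply Rle_trans; [exact Hd1|]. rewrite !Cmod_mult, Cmod_R.
  replace (eps / K * (Rabs h * Cmod q0 + Rabs h * Cmod q1))
    with ((Cmod q0 + Cmod q1) * (eps * Rabs h / K)) by (field; lra).
  apply mult_div_le; unfold K; nra.
Qed.

Lemma dist2piZ_eq_min t : 0 <= t < 2 * PI -> dist2piZ t = Rmin t (2 * PI - t).
Proof.
  intros Ht. pose proof PI_RGT_0. unfold dist2piZ.
  rewrite (is_glb_Rbar_unique _ (Finite (Rmin t (2 * PI - t)))); [reflexivity|].
  split.
  - intros x [k ->]. simpl. destruct (Z.le_gt_cases k 0) as [Hk|Hk].
    + apply IZR_le in Hk. rewrite Rabs_pos_eq by nra. pose proof (Rmin_l t (2 * PI - t)). nra.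
    + assert (1 <= IZR k) by (apply IZR_le; lia). rewrite Rabs_left1 by nra.
      pose proof (Rmin_r t (2 * PI - t)). nra.
  - intros bb Hb.
    assert (B1 : Rbar_le bb t).
    { apply Hb. exists 0%Z. replace (t - 2 * PI * IZR 0) with t by ring.
      rewrite Rabs_pos_eq by lra. reflexivity. }
    assert (B2 : Rbar_le bb (2 * PI - t)).
    { apply Hb. exists 1%Z. replace (t - 2 * PI * IZR 1) with (t - 2 * PI) by ring.
      rewrite Rabs_left1 by lra. ring. }
    destruct bb as [bb| |]; simpl in *; auto. apply Rmin_case; auto.
Qed.

Lemma dist2piZ_shift u k : dist2piZ (u + 2 * PI * IZR k) = dist2piZ u.
Proof.
  unfold dist2piZ. f_equal. apply Glb_Rbar_eqset. intros x. split.
  - intros [j ->]. exists (j - k)%Z. rewrite minus_IZR. f_equal. ring.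
  - intros [j ->]. exists (j + k)%Z. rewrite plus_IZR. f_equal. ring.
Qed.

Lemma dist2piZ_opp u : dist2piZ (- u) = dist2piZ u.
Proof.
  unfold dist2piZ. f_equal. apply Glb_Rbar_eqset. intros x.
  split; intros [j ->]; exists (- j)%Z; rewrite opp_IZR, <- Rabs_Ropp; f_equal; ring.
Qed.

Lemma dist2piZ_representative t : 0 <= t < 2 * PI ->
  exists th (n : Z), t = th + 2 * PI * IZR n /\ Rabs th = dist2piZ t.
Proof.
  intros Ht. rewrite dist2piZ_eq_min by auto. pose proof PI_RGT_0.
  destruct (Rle_dec t PI).
  - exists t, 0%Z. simpl. split; [ring|]. rewrite Rabs_pos_eq, Rmin_left by lra. auto.
  - exists (t - 2 * PI), 1%Z. simpl. split; [ring|].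
    rewrite Rabs_left1, Rmin_right by lra. ring.
Qed.

Lemma mean_value_ineq_cdiff2 U F1 A1 B1 F2 A2 B2 (c1 c2 p0 p1 q0 q1 e0 e1 : C) K :
  cdiff2_on U F1 A1 B1 -> cdiff2_on U F2 A2 B2 ->
  (forall s, 0 <= s <= 1 ->
     U (p0 + RtoC s * e0)%C (p1 + RtoC s * e1)%C /\ U (q0 + RtoC s * e0)%C (q1 + RtoC s * e1)%C) ->
  (forall s, 0 <= s <= 1 ->
     Cmod (c1 * (A1 (p0 + RtoC s * e0)%C (p1 + RtoC s * e1)%C * e0
                 + B1 (p0 + RtoC s * e0)%C (p1 + RtoC s * e1)%C * e1)
           + c2 * (A2 (q0 + RtoC s * e0)%C (q1 + RtoC s * e1)%C * e0
                   + B2 (q0 + RtoC s * e0)%C (q1 + RtoC s * e1)%C * e1))%C <= K) ->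
  Cmod (c1 * (F1 (p0 + e0)%C (p1 + e1)%C - F1 p0 p1)
        + c2 * (F2 (q0 + e0)%C (q1 + e1)%C - F2 q0 q1))%C <= K.
Proof.
  intros H1 H2 HU HK.
  set (phi := fun s : R => (c1 * F1 (p0 + RtoC s * e0)%C (p1 + RtoC s * e1)%C
                            + c2 * F2 (q0 + RtoC s * e0)%C (q1 + RtoC s * e1)%C)%C).
  assert (E : forall p e : C, (p + RtoC 1 * e)%C = (p + e)%C /\ (p + RtoC 0 * e)%C = p)
    by (intros; split; ring).
  replace (c1 * (F1 (p0 + e0)%C (p1 + e1)%C - F1 p0 p1)
           + c2 * (F2 (q0 + e0)%C (q1 + e1)%C - F2 q0 q1))%C with (phi 1 - phi 0)%C
    by (unfold phi; rewrite !(proj1 (E _ _)), !(proj2 (E _ _)); ring).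
  apply mean_value_ineq_C with (2 := HK). intros s Hs. destruct (HU s Hs).
  apply is_Rderiv_C_lin_comb; apply (cdiff2_on_line_deriv U); auto.
Qed.

Definition incr (F : C -> C -> C) (z0 z1 : C) (e0 e1 : R) : C :=
  (F z0 z1 - F (z0 + RtoC e0) (z1 + RtoC e1))%C.

Lemma dfun_incr G z0 z1 t0 t1 : dfun G z0 z1 t0 t1 =
  (incr (G 0%nat) z0 z1 t0 t1 ^ 2 + incr (G 1%nat) z0 z1 t0 t1 ^ 2
   + incr (G 2%nat) z0 z1 t0 t1 ^ 2)%C.
Proof. reflexivity. Qed.

Definition cross_term (G : nat -> C -> C -> C) (z0 z1 : C) (e0 e1 : R) : C :=
  let A j := incr (G j) z0 z1 e0 e1 in
  let B j := incr (G j) (RtoC (Re z0)) (RtoC (Re z1)) e0 e1 in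
  ((A 0%nat - B 0%nat) * (A 0%nat + B 0%nat) + (A 1%nat - B 1%nat) * (A 1%nat + B 1%nat)
   + (A 2%nat - B 2%nat) * (A 2%nat + B 2%nat))%C.

Section Strip_estimates.
Variables (G : nat -> C -> C -> C) (D : nat -> nat -> C -> C -> C)
  (H : nat -> nat -> nat -> C -> C -> C) (R0 : R) (U : C -> C -> Prop) (MD MH : R).
Hypothesis HR0 : 0 < R0.
Hypothesis HU : forall z0 z1, inW R0 z0 -> inW R0 z1 -> U z0 z1.
Hypothesis HUd : forall j, (j < 3)%nat ->
  cdiff2_on U (G j) (D j 0%nat) (D j 1%nat) /\
  cdiff2_on U (D j 0%nat) (H j 0%nat 0%nat) (H j 0%nat 1%nat) /\
  cdiff2_on U (D j 1%nat) (H j 1%nat 0%nat) (H j 1%nat 1%nat).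
Hypothesis HDb : forall j k z0 z1, (j < 3)%nat -> (k < 2)%nat -> inW R0 z0 -> inW R0 z1 ->
  Cmod (D j k z0 z1) <= MD.
Hypothesis HHb : forall j k l z0 z1, (j < 3)%nat -> (k < 2)%nat -> (l < 2)%nat ->
  inW R0 z0 -> inW R0 z1 -> Cmod (H j k l z0 z1) <= MH.

Lemma M0j_spec j : (j < 3)%nat -> 0 <= M0j R0 (D j 0%nat) (D j 1%nat) /\
  forall z0 z1, inW R0 z0 -> inW R0 z1 ->
  vnorm2 (D j 0%nat z0 z1 + D j 0%nat (RtoC (Re z0)) (RtoC (Re z1)))%C
         (D j 1%nat z0 z1 + D j 1%nat (RtoC (Re z0)) (RtoC (Re z1)))%C
  <= M0j R0 (D j 0%nat) (D j 1%nat).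
Proof.
  intros Hj.
  assert (Hb : forall z0 z1, inW R0 z0 -> inW R0 z1 ->
    0 <= vnorm2 (D j 0%nat z0 z1 + D j 0%nat (RtoC (Re z0)) (RtoC (Re z1)))%C
                (D j 1%nat z0 z1 + D j 1%nat (RtoC (Re z0)) (RtoC (Re z1)))%C <= 4 * MD).
  { intros z0 z1 H0 H1. split; [apply vnorm2_nonneg|].
    eapply Rle_trans; [apply vnorm2_le_sum|].
    pose proof (Cmod_triangle (D j 0%nat z0 z1) (D j 0%nat (RtoC (Re z0)) (RtoC (Re z1)))).
    pose proof (Cmod_triangle (D j 1%nat z0 z1) (D j 1%nat (RtoC (Re z0)) (RtoC (Re z1)))).
    pose proof (HDb j 0 z0 z1 Hj ltac:(lia) H0 H1). pose proof (HDb j 1 z0 z1 Hj ltac:(lia) H0 H1).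
    pose proof (HDb j 0 _ _ Hj ltac:(lia) (inW_RtoC R0 (Re z0) HR0) (inW_RtoC R0 (Re z1) HR0)).
    pose proof (HDb j 1 _ _ Hj ltac:(lia) (inW_RtoC R0 (Re z0) HR0) (inW_RtoC R0 (Re z1) HR0)).
    lra. }
  assert (Sup : forall z0 z1, inW R0 z0 -> inW R0 z1 ->
    vnorm2 (D j 0%nat z0 z1 + D j 0%nat (RtoC (Re z0)) (RtoC (Re z1)))%C
           (D j 1%nat z0 z1 + D j 1%nat (RtoC (Re z0)) (RtoC (Re z1)))%C
    <= M0j R0 (D j 0%nat) (D j 1%nat)).
  { intros z0 z1 H0 H1. apply (Lub_Rbar_real_bounds _ _ (4 * MD)).
    - exists z0, z1. auto.
    - intros y [w0 [w1 [G0 [G1 ->]]]]. apply Hb; auto. }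
  split; auto.
  pose proof (inW_RtoC R0 0 HR0). pose proof (Hb _ _ H0 H0). pose proof (Sup _ _ H0 H0). lra.
Qed.

Lemma M1j_spec j : (j < 3)%nat -> 0 <= M1j R0 (H j) /\ forall z0 z1, inW R0 z0 -> inW R0 z1 ->
  mxnorm2 (H j 0%nat 0%nat z0 z1) (H j 0%nat 1%nat z0 z1) (H j 1%nat 0%nat z0 z1)
          (H j 1%nat 1%nat z0 z1) <= M1j R0 (H j).
Proof.
  intros Hj.
  assert (Hb : forall z0 z1, inW R0 z0 -> inW R0 z1 ->
    0 <= mxnorm2 (H j 0%nat 0%nat z0 z1) (H j 0%nat 1%nat z0 z1) (H j 1%nat 0%nat z0 z1)
                 (H j 1%nat 1%nat z0 z1) <= 4 * MH).
  { intros z0 z1 H0 H1.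
    pose proof (mxnorm2_le_sum (H j 0%nat 0%nat z0 z1) (H j 0%nat 1%nat z0 z1)
                               (H j 1%nat 0%nat z0 z1) (H j 1%nat 1%nat z0 z1)).
    pose proof (HHb j 0 0 z0 z1 Hj ltac:(lia) ltac:(lia) H0 H1).
    pose proof (HHb j 0 1 z0 z1 Hj ltac:(lia) ltac:(lia) H0 H1).
    pose proof (HHb j 1 0 z0 z1 Hj ltac:(lia) ltac:(lia) H0 H1).
    pose proof (HHb j 1 1 z0 z1 Hj ltac:(lia) ltac:(lia) H0 H1). lra. }
  assert (Sup : forall z0 z1, inW R0 z0 -> inW R0 z1 ->
    mxnorm2 (H j 0%nat 0%nat z0 z1) (H j 0%nat 1%nat z0 z1) (H j 1%nat 0%nat z0 z1)
            (H j 1%nat 1%nat z0 z1) <= M1j R0 (H j)).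
  { intros z0 z1 H0 H1. apply (Lub_Rbar_real_bounds _ _ (4 * MH)).
    - exists z0, z1. auto.
    - intros y [w0 [w1 [G0 [G1 ->]]]]. apply Hb; auto. }
  split; auto.
  pose proof (inW_RtoC R0 0 HR0). pose proof (Hb _ _ H0 H0). pose proof (Sup _ _ H0 H0). lra.
Qed.

Lemma inW_line z (s th : R) : inW R0 z -> inW R0 (z + RtoC s * RtoC th)%C.
Proof.
  unfold inW. replace (Im (z + RtoC s * RtoC th)%C) with (Im z) by (destruct z; simpl; ring). auto.
Qed.

Lemma Re_line (z : C) (s th : R) :
  RtoC (Re (z + RtoC s * RtoC th)%C) = (RtoC (Re z) + RtoC s * RtoC th)%C.
Proof. destruct z. unfold RtoC, Cplus, Cmult; simpl. f_equal; ring. Qed.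

Lemma incr_plus_bound j z0 z1 (th0 th1 : R) : (j < 3)%nat -> inW R0 z0 -> inW R0 z1 ->
  Cmod (incr (G j) z0 z1 th0 th1 + incr (G j) (RtoC (Re z0)) (RtoC (Re z1)) th0 th1)%C
  <= M0j R0 (D j 0%nat) (D j 1%nat) * sqrt (th0 ^ 2 + th1 ^ 2).
Proof.
  intros Hj H0 H1. destruct (HUd j Hj) as [Cg _]. destruct (M0j_spec j Hj) as [_ Mb].
  unfold incr. rewrite <- Cmod_opp.
  replace (- ((G j z0 z1 - G j (z0 + th0)%C (z1 + th1)%C)
              + (G j (RtoC (Re z0)) (RtoC (Re z1))
                 - G j (RtoC (Re z0) + th0)%C (RtoC (Re z1) + th1)%C)))%C
    with (1 * (G j (z0 + th0)%C (z1 + th1)%C - G j z0 z1)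
          + 1 * (G j (RtoC (Re z0) + th0)%C (RtoC (Re z1) + th1)%C
                 - G j (RtoC (Re z0)) (RtoC (Re z1))))%C by ring.
  apply (mean_value_ineq_cdiff2 U _ _ _ _ _ _ _ _ _ _ _ _ _ _ _ Cg Cg).
  - intros s Hs. split; apply HU; apply inW_line; auto; apply inW_RtoC; auto.
  - intros s Hs. rewrite <- !Re_line.
    set (w0 := (z0 + RtoC s * RtoC th0)%C). set (w1 := (z1 + RtoC s * RtoC th1)%C).
    replace (1 * (D j 0%nat w0 w1 * th0 + D j 1%nat w0 w1 * th1)
             + 1 * (D j 0%nat (RtoC (Re w0)) (RtoC (Re w1)) * th0
                    + D j 1%nat (RtoC (Re w0)) (RtoC (Re w1)) * th1))%C
      with ((D j 0%nat w0 w1 + D j 0%nat (RtoC (Re w0)) (RtoC (Re w1))) * th0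
            + (D j 1%nat w0 w1 + D j 1%nat (RtoC (Re w0)) (RtoC (Re w1))) * th1)%C by ring.
    eapply Rle_trans; [apply Cmod_dot_le|].
    apply Rmult_le_compat_r; [apply sqrt_pos|]. apply Mb; apply inW_line; auto.
Qed.

Lemma Re_line_Im (z : C) (s th : R) :
  (RtoC (Re z) + RtoC s * RtoC th + Ci * RtoC (Im z))%C = (z + RtoC s * RtoC th)%C.
Proof. destruct z. unfold RtoC, Cplus, Cmult, Ci; simpl. f_equal; ring. Qed.

Lemma inW_vertical (x : R) (y u : R) : 0 <= u <= 1 -> Rabs y < R0 ->
  inW R0 (RtoC x + RtoC u * (Ci * RtoC y))%C.
Proof.
  intros Hu Hy. unfold inW.
  replace (Im (RtoC x + RtoC u * (Ci * RtoC y))%C) with (u * y) by (simpl; ring).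
  rewrite Rabs_mult, (Rabs_pos_eq u) by lra. pose proof (Rabs_pos y). nra.
Qed.

(* The derivative of the difference along the horizontal segment is itself an increment of
   [D] along the vertical segment from [Re z + s theta] to [z + s theta]. *)
Lemma incr_minus_bound j z0 z1 (th0 th1 : R) : (j < 3)%nat -> inW R0 z0 -> inW R0 z1 ->
  Cmod (incr (G j) z0 z1 th0 th1 - incr (G j) (RtoC (Re z0)) (RtoC (Re z1)) th0 th1)%C
  <= M1j R0 (H j) * sqrt (Im z0 ^ 2 + Im z1 ^ 2) * sqrt (th0 ^ 2 + th1 ^ 2).
Proof.
  intros Hj H0 H1. destruct (HUd j Hj) as [Cg [Cd0 Cd1]]. destruct (M1j_spec j Hj) as [Mpos Mb].
  set (Y := sqrt (Im z0 ^ 2 + Im z1 ^ 2)). set (T := sqrt (th0 ^ 2 + th1 ^ 2)).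
  assert (HY : 0 <= Y) by apply sqrt_pos. assert (HT : 0 <= T) by apply sqrt_pos.
  unfold incr. rewrite <- Cmod_opp.
  replace (- ((G j z0 z1 - G j (z0 + th0)%C (z1 + th1)%C)
              - (G j (RtoC (Re z0)) (RtoC (Re z1))
                 - G j (RtoC (Re z0) + th0)%C (RtoC (Re z1) + th1)%C)))%C
    with (1 * (G j (z0 + th0)%C (z1 + th1)%C - G j z0 z1)
          + (-1) * (G j (RtoC (Re z0) + th0)%C (RtoC (Re z1) + th1)%C
                    - G j (RtoC (Re z0)) (RtoC (Re z1))))%C by ring.
  apply (mean_value_ineq_cdiff2 U _ _ _ _ _ _ _ _ _ _ _ _ _ _ _ Cg Cg).
  - intros s Hs. split; apply HU; apply inW_line; auto; apply inW_RtoC; auto.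
  - intros s Hs.
    set (P0 := (RtoC (Re z0) + RtoC s * RtoC th0)%C). set (P1 := (RtoC (Re z1) + RtoC s * RtoC th1)%C).
    set (e0 := (Ci * RtoC (Im z0))%C). set (e1 := (Ci * RtoC (Im z1))%C).
    rewrite <- (Re_line_Im z0 s th0), <- (Re_line_Im z1 s th1). fold P0 P1 e0 e1.
    replace (1 * (D j 0%nat (P0 + e0)%C (P1 + e1)%C * th0 + D j 1%nat (P0 + e0)%C (P1 + e1)%C * th1)
             + -1 * (D j 0%nat P0 P1 * th0 + D j 1%nat P0 P1 * th1))%C
      with (RtoC th0 * (D j 0%nat (P0 + e0)%C (P1 + e1)%C - D j 0%nat P0 P1)
            + RtoC th1 * (D j 1%nat (P0 + e0)%C (P1 + e1)%C - D j 1%nat P0 P1))%C by ring.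
    assert (InQ : forall u, 0 <= u <= 1 -> inW R0 (P0 + RtoC u * e0)%C /\ inW R0 (P1 + RtoC u * e1)%C).
    { intros u Hu. unfold P0, P1, e0, e1. rewrite <- !RtoC_mult, <- !RtoC_plus.
      split; apply inW_vertical; auto. }
    apply (mean_value_ineq_cdiff2 U _ _ _ _ _ _ _ _ _ _ _ _ _ _ _ Cd0 Cd1).
    + intros u Hu. destruct (InQ u Hu). split; apply HU; auto.
    + intros u Hu. destruct (InQ u Hu) as [Q0 Q1].
      set (W0 := (P0 + RtoC u * e0)%C) in *. set (W1 := (P1 + RtoC u * e1)%C) in *.
      replace (th0 * (H j 0%nat 0%nat W0 W1 * e0 + H j 0%nat 1%nat W0 W1 * e1)
               + th1 * (H j 1%nat 0%nat W0 W1 * e0 + H j 1%nat 1%nat W0 W1 * e1))%C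
        with ((H j 0%nat 0%nat W0 W1 * e0 + H j 0%nat 1%nat W0 W1 * e1) * th0
              + (H j 1%nat 0%nat W0 W1 * e0 + H j 1%nat 1%nat W0 W1 * e1) * th1)%C by ring.
      eapply Rle_trans; [apply Cmod_dot_le|]. fold T. apply Rmult_le_compat_r; auto.
      eapply Rle_trans; [apply vnorm2_mx_le|]. unfold e0, e1. rewrite vnorm2_Ci_RtoC. fold Y.
      apply Rmult_le_compat_r; auto.
Qed.

Lemma cross_term_bound z0 z1 (th0 th1 : R) : inW R0 z0 -> inW R0 z1 ->
  Cmod (cross_term G z0 z1 th0 th1)
  <= Mbig0 R0 D * Mbig1 R0 H * sqrt (Im z0 ^ 2 + Im z1 ^ 2) * (th0 ^ 2 + th1 ^ 2).
Proof.
  intros H0 H1. set (Y := sqrt (Im z0 ^ 2 + Im z1 ^ 2)). set (T := sqrt (th0 ^ 2 + th1 ^ 2)).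
  assert (HY : 0 <= Y) by apply sqrt_pos. assert (HT : 0 <= T) by apply sqrt_pos.
  assert (Term : forall j, (j < 3)%nat ->
    Cmod ((incr (G j) z0 z1 th0 th1 - incr (G j) (RtoC (Re z0)) (RtoC (Re z1)) th0 th1)
          * (incr (G j) z0 z1 th0 th1 + incr (G j) (RtoC (Re z0)) (RtoC (Re z1)) th0 th1))%C
    <= M0j R0 (D j 0%nat) (D j 1%nat) * M1j R0 (H j) * (Y * T * T)).
  { intros j Hj. rewrite Cmod_mult.
    pose proof (incr_minus_bound j z0 z1 th0 th1 Hj H0 H1) as Em.
    pose proof (incr_plus_bound j z0 z1 th0 th1 Hj H0 H1) as Ep. fold Y T in Em, Ep.
    replace (M0j R0 (D j 0%nat) (D j 1%nat) * M1j R0 (H j) * (Y * T * T))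
      with ((M1j R0 (H j) * Y * T) * (M0j R0 (D j 0%nat) (D j 1%nat) * T)) by ring.
    apply Rmult_le_compat; auto using Cmod_ge_0. }
  assert (Msum : M0j R0 (D 0%nat 0%nat) (D 0%nat 1%nat) * M1j R0 (H 0%nat)
               + M0j R0 (D 1%nat 0%nat) (D 1%nat 1%nat) * M1j R0 (H 1%nat)
               + M0j R0 (D 2%nat 0%nat) (D 2%nat 1%nat) * M1j R0 (H 2%nat)
               <= Mbig0 R0 D * Mbig1 R0 H) by apply Cauchy_Schwarz3.
  replace (th0 ^ 2 + th1 ^ 2) with (T * T) by (unfold T; rewrite sqrt_sqrt; nra).
  unfold cross_term. cbv zeta. eapply Rle_trans; [apply Cmod_triangle3|].
  pose proof (Term 0%nat ltac:(lia)). pose proof (Term 1%nat ltac:(lia)).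
  pose proof (Term 2%nat ltac:(lia)).
  assert (0 <= Y * T * T) by (apply Rmult_le_pos; nra).
  nra.
Qed.

End Strip_estimates.

Lemma gam_periodic R0 G j a b (n m : Z) : 0 < R0 -> periodic_strip R0 (G j) ->
  gam G j (a + 2 * PI * IZR n) (b + 2 * PI * IZR m) = gam G j a b.
Proof.
  intros HR Hp. unfold gam. rewrite !RtoC_plus.
  rewrite (periodic_strip_Z R0); auto using inW_RtoC.
Qed.

Lemma zeta_shift u v (n m : Z) : zeta (u + 2 * PI * IZR n) (v + 2 * PI * IZR m) = zeta u v.
Proof. unfold zeta. rewrite !dist2piZ_shift. reflexivity. Qed.

Lemma incr_periodic R0 F z0 z1 th0 th1 (n0 n1 : Z) : periodic_strip R0 F ->
  inW R0 z0 -> inW R0 z1 ->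
  incr F z0 z1 (th0 + 2 * PI * IZR n0) (th1 + 2 * PI * IZR n1) = incr F z0 z1 th0 th1.
Proof.
  intros Hp H0 H1. unfold incr. rewrite !RtoC_plus.
  replace (z0 + (RtoC th0 + RtoC (2 * PI * IZR n0)))%C
    with (z0 + RtoC th0 + RtoC (2 * PI * IZR n0))%C by ring.
  replace (z1 + (RtoC th1 + RtoC (2 * PI * IZR n1)))%C
    with (z1 + RtoC th1 + RtoC (2 * PI * IZR n1))%C by ring.
  rewrite (periodic_strip_Z R0); auto using inW_shift.
Qed.

Section Lower_bound.
Variables (G : nat -> C -> C -> C) (C0 R0 : R).
Hypothesis HR0 : 0 < R0.
Hypothesis Hreal : forall j t0 t1, (j < 3)%nat -> Im (G j (RtoC t0) (RtoC t1)) = 0.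
Hypothesis HGper : forall j, (j < 3)%nat -> periodic_strip R0 (G j).
Hypothesis HC0 : 0 < C0.
Hypothesis HA1 : forall t0 t1 s0 s1, inI2pi t0 -> inI2pi t1 -> inI2pi s0 -> inI2pi s1 ->
  gdist G t0 t1 s0 s1 >= C0 * zeta (t0 - s0) (t1 - s1).

Lemma gdist_ge_C0_zeta t0 t1 s0 s1 : C0 * zeta (t0 - s0) (t1 - s1) <= gdist G t0 t1 s0 s1.
Proof.
  destruct (reduce_mod_2PI t0) as [p0 Hp0]. destruct (reduce_mod_2PI t1) as [p1 Hp1].
  destruct (reduce_mod_2PI s0) as [q0 Hq0]. destruct (reduce_mod_2PI s1) as [q1 Hq1].
  pose proof (HA1 _ _ _ _ Hp0 Hp1 Hq0 Hq1) as HA.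
  unfold gdist in HA. rewrite !(gam_periodic R0) in HA by (auto; apply HGper; lia).
  replace (t0 + 2 * PI * IZR p0 - (s0 + 2 * PI * IZR q0))
    with (t0 - s0 + 2 * PI * IZR (p0 - q0)) in HA by (rewrite minus_IZR; ring).
  replace (t1 + 2 * PI * IZR p1 - (s1 + 2 * PI * IZR q1))
    with (t1 - s1 + 2 * PI * IZR (p1 - q1)) in HA by (rewrite minus_IZR; ring).
  rewrite zeta_shift in HA. unfold gdist. lra.
Qed.

Lemma G_RtoC j a b : (j < 3)%nat -> G j (RtoC a) (RtoC b) = RtoC (gam G j a b).
Proof.
  intros Hj. pose proof (Hreal j a b Hj). unfold gam.
  destruct (G j (RtoC a) (RtoC b)) as [p q]. simpl in *. subst. reflexivity.
Qed.

(* On the real torus the squared increments sum to the squared distance of (A1). *)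
Lemma real_incr_lower_bound a0 a1 th0 th1 :
  Rabs th0 = dist2piZ th0 -> Rabs th1 = dist2piZ th1 ->
  C0 ^ 2 * (th0 ^ 2 + th1 ^ 2) <=
  Cmod (incr (G 0%nat) (RtoC a0) (RtoC a1) th0 th1 ^ 2 + incr (G 1%nat) (RtoC a0) (RtoC a1) th0 th1 ^ 2
        + incr (G 2%nat) (RtoC a0) (RtoC a1) th0 th1 ^ 2)%C.
Proof.
  intros E0 E1. unfold incr. rewrite <- !RtoC_plus, !G_RtoC by lia.
  rewrite <- !RtoC_minus, <- !RtoC_pow, <- !RtoC_plus, Cmod_R.
  pose proof (gdist_ge_C0_zeta a0 a1 (a0 + th0) (a1 + th1)) as HA. unfold gdist in HA.
  set (S := (gam G 0 a0 a1 - gam G 0 (a0 + th0) (a1 + th1)) ^ 2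
          + (gam G 1 a0 a1 - gam G 1 (a0 + th0) (a1 + th1)) ^ 2
          + (gam G 2 a0 a1 - gam G 2 (a0 + th0) (a1 + th1)) ^ 2) in *.
  assert (HS : 0 <= S) by (unfold S; repeat apply Rplus_le_le_0_compat; apply pow2_ge_0).
  replace (a0 - (a0 + th0)) with (- th0) in HA by ring.
  replace (a1 - (a1 + th1)) with (- th1) in HA by ring.
  unfold zeta in HA. rewrite !dist2piZ_opp, <- E0, <- E1, !pow2_abs in HA.
  rewrite Rabs_pos_eq by lra.
  pose proof (sqrt_pos (th0 ^ 2 + th1 ^ 2)). pose proof (sqrt_pos S).
  rewrite <- (pow2_sqrt S) by lra. rewrite <- (pow2_sqrt (th0 ^ 2 + th1 ^ 2)) by nra.
  replace (C0 ^ 2 * sqrt (th0 ^ 2 + th1 ^ 2) ^ 2) with ((C0 * sqrt (th0 ^ 2 + th1 ^ 2)) ^ 2)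
    by ring.
  apply pow_incr. nra.
Qed.

End Lower_bound.

Lemma bstar_lt_R0 b C0 R0 m0 m1 : 0 < b < bmax C0 R0 m0 m1 -> bstar b C0 R0 m0 m1 < R0.
Proof.
  unfold bstar, bmax. intros Hb.
  pose proof (Rmin_r (C0 ^ 2 / (sqrt 2 * m0 * m1)) (R0 / 2)). lra.
Qed.

Lemma sqrt_sum_sq_le (y0 y1 c : R) : Rabs y0 < c -> Rabs y1 < c ->
  sqrt (y0 ^ 2 + y1 ^ 2) <= sqrt 2 * c.
Proof.
  intros H0 H1. pose proof (Rabs_pos y0). pose proof (Rabs_pos y1).
  rewrite <- (sqrt_pow2 c) by lra. rewrite <- sqrt_mult_alt by lra. apply sqrt_le_1_alt.
  rewrite <- (pow2_abs y0), <- (pow2_abs y1). simpl. nra.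
Qed.

Lemma dfun_split G z0 z1 (th0 th1 : R) : dfun G z0 z1 th0 th1 =
  (incr (G 0%nat) (RtoC (Re z0)) (RtoC (Re z1)) th0 th1 ^ 2
   + incr (G 1%nat) (RtoC (Re z0)) (RtoC (Re z1)) th0 th1 ^ 2
   + incr (G 2%nat) (RtoC (Re z0)) (RtoC (Re z1)) th0 th1 ^ 2
   + cross_term G z0 z1 th0 th1)%C.
Proof. rewrite dfun_incr. unfold cross_term. cbv zeta. ring. Qed.

Section Main_estimate.
Variables (G : nat -> C -> C -> C) (D : nat -> nat -> C -> C -> C)
  (H : nat -> nat -> nat -> C -> C -> C) (C0 R0 : R) (U : C -> C -> Prop) (MD MH : R).
Hypothesis HR0 : 0 < R0.
Hypothesis HU : forall z0 z1, inW R0 z0 -> inW R0 z1 -> U z0 z1.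
Hypothesis HUd : forall j, (j < 3)%nat ->
  cdiff2_on U (G j) (D j 0%nat) (D j 1%nat) /\
  cdiff2_on U (D j 0%nat) (H j 0%nat 0%nat) (H j 0%nat 1%nat) /\
  cdiff2_on U (D j 1%nat) (H j 1%nat 0%nat) (H j 1%nat 1%nat).
Hypothesis HDb : forall j k z0 z1, (j < 3)%nat -> (k < 2)%nat -> inW R0 z0 -> inW R0 z1 ->
  Cmod (D j k z0 z1) <= MD.
Hypothesis HHb : forall j k l z0 z1, (j < 3)%nat -> (k < 2)%nat -> (l < 2)%nat ->
  inW R0 z0 -> inW R0 z1 -> Cmod (H j k l z0 z1) <= MH.
Hypothesis Hreal : forall j t0 t1, (j < 3)%nat -> Im (G j (RtoC t0) (RtoC t1)) = 0.
Hypothesis HGper : forall j, (j < 3)%nat -> periodic_strip R0 (G j).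
Hypothesis HC0 : 0 < C0.
Hypothesis HA1 : forall t0 t1 s0 s1, inI2pi t0 -> inI2pi t1 -> inI2pi s0 -> inI2pi s1 ->
  gdist G t0 t1 s0 s1 >= C0 * zeta (t0 - s0) (t1 - s1).

(* [d(z, theta)] is its value at [Re z], bounded below by (A1), plus the cross term, which is
   small when [Im z] is. *)
Lemma dfun_lower_bound z0 z1 th0 th1 : inW R0 z0 -> inW R0 z1 ->
  Rabs th0 = dist2piZ th0 -> Rabs th1 = dist2piZ th1 ->
  (C0 ^ 2 - Mbig0 R0 D * Mbig1 R0 H * sqrt (Im z0 ^ 2 + Im z1 ^ 2)) * (th0 ^ 2 + th1 ^ 2)
  <= Cmod (dfun G z0 z1 th0 th1).
Proof.
  intros H0 H1 E0 E1.
  rewrite dfun_split.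
  pose proof (real_incr_lower_bound G C0 R0 HR0 Hreal HGper HC0 HA1 (Re z0) (Re z1) th0 th1 E0 E1)
    as Hre.
  pose proof (cross_term_bound G D H R0 U MD MH HR0 HU HUd HDb HHb z0 z1 th0 th1 H0 H1)
    as Hcross.
  pose proof (Cmod_triangle (incr (G 0%nat) (RtoC (Re z0)) (RtoC (Re z1)) th0 th1 ^ 2
    + incr (G 1%nat) (RtoC (Re z0)) (RtoC (Re z1)) th0 th1 ^ 2
    + incr (G 2%nat) (RtoC (Re z0)) (RtoC (Re z1)) th0 th1 ^ 2
    + cross_term G z0 z1 th0 th1)%C (- cross_term G z0 z1 th0 th1)%C) as Htri.
  rewrite Cmod_opp in Htri.
  match type of Htri with Cmod ?X <= _ => replace X with
    (incr (G 0%nat) (RtoC (Re z0)) (RtoC (Re z1)) th0 th1 ^ 2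
     + incr (G 1%nat) (RtoC (Re z0)) (RtoC (Re z1)) th0 th1 ^ 2
     + incr (G 2%nat) (RtoC (Re z0)) (RtoC (Re z1)) th0 th1 ^ 2)%C in Htri by ring end.
  lra.
Qed.

End Main_estimate.

Theorem lemma2
  (G : nat -> C -> C -> C)              (* analytic extensions gamma_0, gamma_1, gamma_2 *)
  (D : nat -> nat -> C -> C -> C)       (* D j k = d gamma_j / d z_k *)
  (H : nat -> nat -> nat -> C -> C -> C) (* H j k l = d^2 gamma_j / dz_k dz_l *)
  (C0 R0 b : R)
  (* Gamma is real-valued and 2pi-biperiodic on R^2 *)
  (Hreal : forall j t0 t1, (j < 3)%nat -> Im (G j (RtoC t0) (RtoC t1)) = 0)
  (Hper_real : forall j t0 t1, (j < 3)%nat ->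
     gam G j (t0 + 2 * PI) t1 = gam G j t0 t1 /\ gam G j t0 (t1 + 2 * PI) = gam G j t0 t1)
  (* (A1) *)
  (HC0 : 0 < C0)
  (HA1 : forall t0 t1 s0 s1, inI2pi t0 -> inI2pi t1 -> inI2pi s0 -> inI2pi s1 ->
     gdist G t0 t1 s0 s1 >= C0 * zeta (t0 - s0) (t1 - s1))
  (* (A2) *)
  (HR0 : 0 < R0)
  (HA2 : exists U : C -> C -> Prop, openC2 U /\
     (forall z0 z1, inWcl R0 z0 -> inWcl R0 z1 -> U z0 z1) /\
     forall j, (j < 3)%nat ->
       cdiff2_on U (G j) (D j 0%nat) (D j 1%nat) /\
       cdiff2_on U (D j 0%nat) (H j 0%nat 0%nat) (H j 0%nat 1%nat) /\
       cdiff2_on U (D j 1%nat) (H j 1%nat 0%nat) (H j 1%nat 1%nat))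
  (* the extension is still 2pi-biperiodic on the closed strip *)
  (Hper : forall j z0 z1, (j < 3)%nat -> inWcl R0 z0 -> inWcl R0 z1 ->
     G j (z0 + RtoC (2 * PI))%C z1 = G j z0 z1 /\ G j z0 (z1 + RtoC (2 * PI))%C = G j z0 z1)
  (* choice of b *)
  (Hb : 0 < b < bmax C0 R0 (Mbig0 R0 D) (Mbig1 R0 H)) :
  forall (z0 z1 : C) (t0 t1 : R),
    inW (bstar b C0 R0 (Mbig0 R0 D) (Mbig1 R0 H)) z0 ->
    inW (bstar b C0 R0 (Mbig0 R0 D) (Mbig1 R0 H)) z1 ->
    inI2pi t0 -> inI2pi t1 ->
    Cmod (dfun G z0 z1 t0 t1) >= Cone b C0 R0 (Mbig0 R0 D) (Mbig1 R0 H) * (zeta t0 t1) ^ 2.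
Proof.
  intros z0 z1 t0 t1 Hz0 Hz1 Ht0 Ht1.
  destruct HA2 as [U [HUo [HUs HUd]]].
  pose proof (bstar_lt_R0 _ _ _ _ _ Hb) as HbsR0.
  assert (HW : forall z, inW (bstar b C0 R0 (Mbig0 R0 D) (Mbig1 R0 H)) z -> inW R0 z)
    by (unfold inW; intros; lra).
  assert (HU : forall z0 z1, inW R0 z0 -> inW R0 z1 -> U z0 z1)
    by (intros; apply HUs; apply inW_inWcl; auto).
  assert (HGper : forall j, (j < 3)%nat -> periodic_strip R0 (G j))
    by (intros j Hj w0 w1 H0 H1; apply Hper; auto using inW_inWcl).
  destruct (D_bounded_near_box G D H R0 U HR0 HUo HUs HUd) as [r [M [Hr HrM]]].
  assert (HDb : forall j k z0 z1, (j < 3)%nat -> (k < 2)%nat -> inW R0 z0 -> inW R0 z1 ->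
    Cmod (D j k z0 z1) <= M) by (intros; eapply D_bound_strip; eauto).
  assert (HHb : forall j k l z0 z1, (j < 3)%nat -> (k < 2)%nat -> (l < 2)%nat ->
    inW R0 z0 -> inW R0 z1 -> Cmod (H j k l z0 z1) <= 4 * M / r)
    by (intros; eapply H_bound_strip; eauto).
  destruct (dist2piZ_representative t0 Ht0) as [th0 [n0 [-> E0]]].
  destruct (dist2piZ_representative t1 Ht1) as [th1 [n1 [-> E1]]].
  rewrite dist2piZ_shift in E0, E1.
  unfold zeta. rewrite !dist2piZ_shift, <- E0, <- E1, !pow2_abs, pow2_sqrt by nra.
  rewrite dfun_incr, !(incr_periodic R0) by auto.
  rewrite <- dfun_incr. apply Rle_ge.
  eapply Rle_trans;
    [|apply (dfun_lower_bound G D H C0 R0 U M (4 * M / r)); auto].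
  pose proof (sqrt_sum_sq_le (Im z0) (Im z1) _ Hz0 Hz1).
  assert (0 <= Mbig0 R0 D * Mbig1 R0 H) by (apply Rmult_le_pos; apply sqrt_pos).
  unfold Cone. apply Rmult_le_compat_r; [nra|]. nra.
Qed.
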